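(* Let $\epsilon$ be a positive parameter. Then there is a deterministic algorithm that, given query access to a list $a_1\le a_2\le\cdots\le a_n$ of nonnegative real numbers sorted in nondecreasing order (and given $n$ and $\epsilon$), outputs a $(1+\epsilon)$-approximation for the sum $\sum_{i=1}^n a_i$ in time $$O\!\left(\frac{1}{\epsilon}\min\!\left(\log n,\ \log\frac{x_{max}}{x_{min}}\right)\cdot\left(\log\frac{1}{\epsilon}+\log\log n\right)\right),$$ where $x_{max}$ and $x_{min}$ are the largest and the least positive elements of the input list, respectively.
   Context: A real number $s$ is a $(1+\epsilon)$-approximation for the sum of $a_1,\dots,a_n$ if $\frac{1}{1+\epsilon}\sum_{i=1}^n a_i\le s\le (1+\epsilon)\sum_{i=1}^n a_i$. The algorithm accesses the input list by reading (querying) individual entries $a_i$ at unit cost; running time counts such queries and arithmetic operations. *)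

From Stdlib Require Import Reals List ZArith.
Open Scope R_scope.

(** Registers hold reals and are indexed by natural numbers.  Every executed
    instruction (a query, an arithmetic operation, a comparison/jump, or the
    final halt) costs one unit of time. *)
Inductive instr : Type :=
| IConst0 (d : nat)
| IConst1 (d : nat)
| IAdd (d x y : nat)
| ISub (d x y : nat)
| IMul (d x y : nat)
| IDiv (d x y : nat)               (* r_d := r_x / r_y  (Stdlib: /0 = 0) *)
| IFloor (d x : nat)
| IQuery (d x : nat)
| IJlt (x y : nat) (t : nat)
| IJmp (t : nat)
| IHalt (x : nat).

Definition program := list instr.

Definition regs := nat -> R.

Definition upd (r : regs) (d : nat) (v : R) : regs :=
  fun k => if Nat.eqb k d then v else r k.

Definition floorR (x : R) : R := IZR (Int_part x).

(** [run p a fuel pc r] executes program [p] with input oracle [a]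
    (the list is [a 1, ..., a n]) from program counter [pc] and register
    file [r], executing at most [fuel] instructions; it returns [Some s]
    iff the machine executes [IHalt x] (with [r_x = s]) within that many
    instructions (the halt counted). *)
Fixpoint run (p : program) (a : nat -> R) (fuel : nat) (pc : nat) (r : regs)
  : option R :=
  match fuel with
  | O => None
  | S f =>
    match nth_error p pc with
    | None => None
    | Some i =>
      match i with
      | IConst0 d => run p a f (S pc) (upd r d 0)
      | IConst1 d => run p a f (S pc) (upd r d 1)
      | IAdd d x y => run p a f (S pc) (upd r d (r x + r y))
      | ISub d x y => run p a f (S pc) (upd r d (r x - r y))
      | IMul d x y => run p a f (S pc) (upd r d (r x * r y))
      | IDiv d x y => run p a f (S pc) (upd r d (r x / r y))
      | IFloor d x => run p a f (S pc) (upd r d (floorR (r x)))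
      | IQuery d x => run p a f (S pc) (upd r d (a (Z.to_nat (Int_part (r x)))))
      | IJlt x y t => if Rlt_dec (r x) (r y) then run p a f t r
                      else run p a f (S pc) r
      | IJmp t => run p a f t r
      | IHalt x => Some (r x)
      end
    end
  end.

Definition init_regs (n : nat) (eps : R) : regs :=
  fun k => match k with 0%nat => INR n | 1%nat => eps | _ => 0 end.

Definition sorted_nonneg (a : nat -> R) (n : nat) : Prop :=
  (forall i, (1 <= i <= n)%nat -> 0 <= a i) /\
  (forall i j, (1 <= i)%nat -> (i <= j)%nat -> (j <= n)%nat -> a i <= a j).

Fixpoint sumR (a : nat -> R) (k : nat) : R :=
  match k with O => 0 | S k' => sumR a k' + a (S k') end.

Fixpoint maxR (a : nat -> R) (k : nat) : R :=
  match k with O => 0 | S k' => Rmax (maxR a k') (a (S k')) end.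

Fixpoint minpos (a : nat -> R) (k : nat) : option R :=
  match k with
  | O => None
  | S k' =>
    let m := minpos a k' in
    if Rlt_dec 0 (a (S k'))
    then Some (match m with None => a (S k') | Some v => Rmin v (a (S k')) end)
    else m
  end.

Definition log_ratio (a : nat -> R) (n : nat) : R :=
  match minpos a n with
  | None => 0
  | Some xmin => ln (maxR a n / xmin)
  end.

Definition approx (eps S s : R) : Prop :=
  / (1 + eps) * S <= s <= (1 + eps) * S.

(** The time bound inside the O( . ), with each logarithmic factor
    floored at a constant (1 + ...), the standard reading of O-bounds
    with logarithms:
    (1/eps) * (1 + min(log n, log(xmax/xmin))) * (1 + log(1/eps) + log(1 + log n)). *)
Definition time_bound (eps : R) (n : nat) (lr : R) : R :=
  / eps * (1 + Rmin (ln (INR n)) lr) * (1 + ln (/ eps) + ln (1 + ln (INR n))).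

From Stdlib Require Import Reals List ZArith Lia Lra Psatz.
Open Scope R_scope.
Import ListNotations.

(* The algorithm keeps an index [i], initially [n], and an estimate [O] of
   the already processed suffix sum [a (i+1) + ... + a n].  Each round peels
   a block [a (i-L+1) .. a i] off the unprocessed prefix and charges it as
   [L] copies of its smallest element.  The basic block length is
   [B = floor (eps/3 * (n - i))]: if [a i] already drops by a factor [1 + eps/3]
   within [B] steps the block has length [B]; otherwise the longest block on
   which [a] varies by less than [1 + eps/3] is located by a doubly
   exponential search (lengths [B * 2^(2^j)]), refined to a factor 2 by a
   binary search on the exponents and then to relative precision [eps/3] by
   bisection.  Either the block is flat, so charging its minimum costs a
   factor [1 + eps/3], or it is short compared with the [n - i] processed
   elements, each at least as large as every element of the block.

   Each search costs [O (log log n + log (1/eps))] steps.  A round either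
   advances [n - i] by about [eps/6 * (n - i)] or lowers [a i] by a factor
   [1 + eps/3], so there are [O (1/eps * min (log n, log (xmax/xmin)))]
   rounds. *)

Lemma Int_part_eq (x : R) (z : Z) : IZR z <= x < IZR z + 1 -> Int_part x = z.
Proof.
  intros [H1 H2]. unfold Int_part.
  assert (up x = (z + 1)%Z) as ->.
  { symmetry. apply tech_up; rewrite plus_IZR; simpl; lra. }
  ring.
Qed.

Lemma floorR_INR_add (k : nat) (y : R) : 0 <= y < 1 -> floorR (INR k + y) = INR k.
Proof.
  intros Hy. unfold floorR. rewrite (Int_part_eq _ (Z.of_nat k)).
  - now rewrite <- INR_IZR_INZ.
  - rewrite <- INR_IZR_INZ; lra.
Qed.

Lemma floorR_INR (k : nat) : floorR (INR k) = INR k.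
Proof. rewrite <- (Rplus_0_r (INR k)) at 1. apply floorR_INR_add; lra. Qed.

Lemma Int_part_INR_to_nat (k : nat) : Z.to_nat (Int_part (INR k)) = k.
Proof.
  rewrite (Int_part_eq _ (Z.of_nat k)); [apply Nat2Z.id|].
  rewrite <- INR_IZR_INZ; lra.
Qed.

Lemma floorR_half_INR (p : nat) : floorR (INR p / 2) = INR (p / 2).
Proof.
  pose proof (Nat.div_mod p 2 ltac:(lia)) as Hd.
  assert (Hr : INR (p mod 2) = 0 \/ INR (p mod 2) = 1).
  { pose proof (Nat.mod_upper_bound p 2 ltac:(lia)).
    destruct (p mod 2) as [|[|q]]; [left; reflexivity | right; reflexivity | lia]. }
  assert (E : INR p / 2 = INR (p / 2) + INR (p mod 2) / 2).
  { rewrite Hd at 1. rewrite plus_INR, mult_INR. simpl. field. }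
  rewrite E. apply floorR_INR_add. destruct Hr as [-> | ->]; lra.
Qed.

Lemma floorR_nonneg_nat (x : R) : 0 <= x ->
  exists k : nat, floorR x = INR k /\ INR k <= x < INR k + 1.
Proof.
  intros Hx. unfold floorR. destruct (base_Int_part x) as [H1 H2].
  assert (Hz : (0 <= Int_part x)%Z).
  { destruct (Z_lt_le_dec (Int_part x) 0) as [Hl|Hl]; [|exact Hl].
    assert (Int_part x <= -1)%Z as Hm by lia. apply IZR_le in Hm. lra. }
  exists (Z.to_nat (Int_part x)). rewrite INR_IZR_INZ, Z2Nat.id by lia. split; [reflexivity|lra].
Qed.

Lemma ln_le x y : 0 < x -> x <= y -> ln x <= ln y.
Proof. intros Hx [Hxy | <-]; [left; apply ln_increasing|]; lra. Qed.

Lemma ln_ge_0 x : 1 <= x -> 0 <= ln x.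
Proof. intros. rewrite <- ln_1. apply ln_le; lra. Qed.

Lemma ln_le_sub_1 x : 0 < x -> ln x <= x - 1.
Proof. intros Hx. pose proof (exp_ineq1_le (ln x)) as H. rewrite exp_ln in H by lra. lra. Qed.

Lemma ln_1_add_ge_half x : 0 <= x <= 1 -> x / 2 <= ln (1 + x).
Proof.
  intros Hx. pose proof (ln_le_sub_1 (/ (1 + x)) ltac:(apply Rinv_0_lt_compat; lra)) as H.
  rewrite ln_Rinv in H by lra.
  assert (/ (1 + x) - 1 = - (x / (1 + x))) as E by (field; lra).
  assert (x / 2 <= x / (1 + x)).
  { unfold Rdiv. apply Rmult_le_compat_l; [lra|]. apply Rinv_le_contravar; lra. }
  lra.
Qed.

Lemma Rle_div_of_mul (x y z : R) : 0 < z -> x * z <= y -> x <= y / z.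
Proof. intros. apply (Rmult_le_reg_r z); [lra|]. unfold Rdiv. rewrite Rmult_assoc, Rinv_l by lra. lra. Qed.

Lemma Rdiv_le_den (x y z : R) : 0 <= x -> 0 < y -> y <= z -> x / z <= x / y.
Proof. intros. unfold Rdiv. apply Rmult_le_compat_l; [lra|]. apply Rinv_le_contravar; lra. Qed.

Lemma Rdiv_ge_0 (x y : R) : 0 <= x -> 0 < y -> 0 <= x / y.
Proof. intros. unfold Rdiv. apply Rmult_le_pos; [lra|left; apply Rinv_0_lt_compat; lra]. Qed.

Lemma div_ln2_le x : 0 <= x -> x / ln 2 <= 2 * x.
Proof.
  intros. pose proof ln_lt_2.
  eapply Rle_trans; [apply (Rdiv_le_den x (/2)); lra|]. unfold Rdiv. rewrite Rinv_inv. lra.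
Qed.

Lemma ln_div_ge_0 x y : 0 < x -> x <= y -> 0 <= ln (y / x).
Proof.
  intros. apply ln_ge_0, Rle_div_of_mul; lra.
Qed.

Lemma sorted_le a n i j : sorted_nonneg a n -> (1 <= i)%nat -> (i <= j)%nat -> (j <= n)%nat -> a i <= a j.
Proof. intros [_ H] ? ? ?. apply H; lia. Qed.

Lemma sorted_ge0 a n i : sorted_nonneg a n -> (1 <= i <= n)%nat -> 0 <= a i.
Proof. intros [H _] ?. apply H; lia. Qed.

Lemma sumR_block_bounds a n j L : sorted_nonneg a n -> (1 <= j)%nat -> (j - 1 + L <= n)%nat ->
  INR L * a j <= sumR a (j - 1 + L) - sumR a (j - 1) <= INR L * a (j - 1 + L)%nat.
Proof.
  intros Hs Hj. induction L as [|L IH]; intros HL.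
  - rewrite Nat.add_0_r. simpl. lra.
  - replace (j - 1 + S L)%nat with (S (j - 1 + L)) by lia. simpl sumR. rewrite S_INR.
    destruct L as [|L].
    + rewrite Nat.add_0_r. replace (S (j - 1)) with j by lia. simpl. lra.
    + destruct (IH ltac:(lia)) as [IH1 IH2].
      assert (a j <= a (S (j - 1 + S L))) by (apply (sorted_le a n); [assumption|lia..]).
      assert (a (j - 1 + S L)%nat <= a (S (j - 1 + S L))) by (apply (sorted_le a n); [assumption|lia..]).
      pose proof (pos_INR (S L)). nra.
Qed.

Definition tail_sum a n i := sumR a n - sumR a i.
Definition tail_excess a n i := tail_sum a n i - INR (n - i) * a (S i).

(* [O] approximates the processed suffix sum; the slack [d * tail_excess] is
   what pays for short blocks charged at a lower value. *)
Definition approx_inv a n (d : R) i O :=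
  O <= tail_sum a n i /\ tail_sum a n i <= (1 + d) * O + d * tail_excess a n i.

Definition block_ok a n (d : R) j i :=
  a i <= (1 + d) * a j \/ INR (i - j + 1) <= d * INR (n - i).

Lemma block_charge_le (d L N aj ai ai1 S : R) : 0 <= d -> 0 <= L -> 0 <= N ->
  0 <= aj <= ai -> N * ai <= N * ai1 -> L * aj <= S <= L * ai ->
  ai <= (1 + d) * aj \/ L <= d * N ->
  S <= L * aj + d * (N * ai1 - N * aj) + d * S.
Proof.
  intros Hd HL HN Ha Hai1 [HS1 HS2] Hv.
  assert (N * aj <= N * ai) by (apply Rmult_le_compat_l; lra).
  assert (0 <= L * aj) by (apply Rmult_le_pos; lra).
  assert (0 <= d * (N * ai1 - N * aj)) by (apply Rmult_le_pos; lra).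
  destruct Hv as [Hflat | Hshort].
  - assert (L * ai <= L * ((1 + d) * aj)) by (apply Rmult_le_compat_l; lra).
    assert (d * (L * aj) <= d * S) by (apply Rmult_le_compat_l; lra). nra.
  - assert (L * (ai - aj) <= d * N * (ai - aj)) by (apply Rmult_le_compat_r; lra).
    assert (d * (N * ai) <= d * (N * ai1)) by (apply Rmult_le_compat_l; lra).
    assert (0 <= d * S) by (apply Rmult_le_pos; lra). lra.
Qed.

Lemma approx_inv_block a n d j i O : 0 <= d -> sorted_nonneg a n -> (1 <= j)%nat -> (j <= i)%nat ->
  (i <= n)%nat -> block_ok a n d j i -> approx_inv a n d i O ->
  approx_inv a n d (j - 1) (O + INR (i - j + 1) * a j).
Proof.
  intros Hd Hs Hj Hji Hin Hv [I1 I2].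
  pose proof (sumR_block_bounds a n j (i - j + 1) Hs Hj ltac:(lia)) as HS.
  replace (j - 1 + (i - j + 1))%nat with i in HS by lia.
  assert (EN : INR (n - (j - 1)) = INR (n - i) + INR (i - j + 1))
    by (rewrite <- plus_INR; f_equal; lia).
  assert (Haj : 0 <= a j) by (apply (sorted_ge0 a n); [assumption|lia]).
  assert (Hij : a j <= a i) by (apply (sorted_le a n); [assumption|lia..]).
  assert (Hnext : INR (n - i) * a i <= INR (n - i) * a (S i)).
  { destruct (Nat.eq_dec i n) as [->|Hne].
    - rewrite Nat.sub_diag. simpl. lra.
    - apply Rmult_le_compat_l; [apply pos_INR|]. apply (sorted_le a n); [assumption|lia..]. }
  pose proof (block_charge_le d _ _ (a j) (a i) (a (S i)) _ Hd (pos_INR (i - j + 1))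
    (pos_INR (n - i)) (conj Haj Hij) Hnext HS Hv) as Hc.
  unfold approx_inv, tail_excess, tail_sum in *.
  replace (S (j - 1)) with j by lia. rewrite EN.
  pose proof (pos_INR (i - j + 1)). split; nra.
Qed.

Lemma approx_inv_init a n d : approx_inv a n d n 0.
Proof. unfold approx_inv, tail_excess, tail_sum. rewrite Nat.sub_diag. simpl. lra. Qed.

Lemma approx_inv_final a n eps O : (1 <= n)%nat -> 0 < eps < 1 -> sorted_nonneg a n ->
  approx_inv a n (eps / 3) 0 O -> approx eps (sumR a n) O.
Proof.
  intros Hn He Hs [I1 I2]. unfold tail_excess, tail_sum in *. simpl sumR in *.
  rewrite Nat.sub_0_r in I2. set (S := sumR a n) in *.
  assert (0 <= INR n * a 1%nat) by (apply Rmult_le_pos; [apply pos_INR|apply (sorted_ge0 a n); [assumption|lia]]).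
  assert (HS : S * (1 - eps / 3) <= (1 + eps / 3) * O) by nra.
  assert (0 <= S).
  { pose proof (sumR_block_bounds a n 1 n Hs ltac:(lia) ltac:(lia)) as [Q _].
    replace (1 - 1 + n)%nat with n in Q by lia. simpl sumR in Q. unfold S. lra. }
  unfold approx. split.
  - apply (Rmult_le_reg_l (1 + eps)); [lra|]. rewrite <- Rmult_assoc, Rinv_r, Rmult_1_l by lra.
    nra.
  - nra.
Qed.

Lemma approx_inv_peel a n d i L O : 0 <= d -> sorted_nonneg a n -> (1 <= L <= i)%nat -> (i <= n)%nat ->
  (a i <= (1 + d) * a (i - L + 1)%nat \/ INR L <= d * INR (n - i)) ->
  approx_inv a n d i O -> approx_inv a n d (i - L) (O + INR L * a (i - L + 1)%nat).
Proof.
  intros Hd Hs HL Hi Hv HI.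
  pose proof (approx_inv_block a n d (i - L + 1) i O Hd Hs ltac:(lia) ltac:(lia) Hi) as H.
  replace (i - (i - L + 1) + 1)%nat with L in H by lia.
  replace (i - L + 1 - 1)%nat with (i - L)%nat in H by lia.
  apply H; [|exact HI]. unfold block_ok. now replace (i - (i - L + 1) + 1)%nat with L by lia.
Qed.

Definition flat (a : nat -> R) (i : nat) (d : R) (L : nat) : Prop :=
  (L <= i)%nat /\ a i <= a (i - L + 1)%nat * (1 + d).

Definition steep (a : nat -> R) (i : nat) (d : R) (L : nat) : Prop :=
  a (i - L + 1)%nat * (1 + d) < a i.

Lemma steep_next a n d i L : 0 <= d -> sorted_nonneg a n -> (L < i <= n)%nat ->
  (1 <= L)%nat -> steep a i d L -> a (i - L)%nat * (1 + d) < a i.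
Proof.
  intros Hd Hs Hi HL H. unfold steep in H.
  assert (a (i - L)%nat <= a (i - L + 1)%nat) by (apply (sorted_le a n); [assumption|lia..]).
  assert (a (i - L)%nat * (1 + d) <= a (i - L + 1)%nat * (1 + d)) by (apply Rmult_le_compat_r; lra).
  lra.
Qed.

(* After [k] rounds: [count_potential] records that [n - i] grew
   geometrically, [ratio_potential] that [a i] shrank geometrically. *)
Definition count_potential (d : R) n k i := (1 + d / 4) ^ k <= 1 + d * INR (n - i).

Definition ratio_potential a n (d : R) k i :=
  ((1 <= i)%nat -> (1 + d) ^ k * a i <= a n) /\
  ((1 <= k)%nat -> exists j, (1 <= j <= n)%nat /\ 0 < a j /\ (1 + d) ^ (k - 1) * a j <= a n).

Lemma potentials_init a n d : count_potential d n 0 n /\ ratio_potential a n d 0 n.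
Proof.
  unfold count_potential, ratio_potential. rewrite Nat.sub_diag. simpl. split; [lra|]. split; [lra|lia].
Qed.

Lemma count_potential_step n d k i i' (B : nat) : 0 < d ->
  (n - i + B <= n - i')%nat -> 1 <= INR B -> (1 <= d * INR (n - i) -> d * INR (n - i) / 2 <= INR B) ->
  count_potential d n k i -> count_potential d n (S k) i'.
Proof.
  intros Hd HB HB1 HB2 P1. unfold count_potential in *. simpl pow.
  set (D := INR (n - i)) in *.
  assert (HD : D + INR B <= INR (n - i')) by (unfold D; rewrite <- plus_INR; apply le_INR; lia).
  assert (0 <= D) by apply pos_INR.
  assert (0 <= (1 + d / 4) ^ k) by (apply pow_le; lra).
  assert ((1 + d / 4) * (1 + d / 4) ^ k <= (1 + d / 4) * (1 + d * D)) by (apply Rmult_le_compat_l; lra).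
  assert ((1 + d / 4) * (1 + d * D) <= 1 + d * (D + INR B)).
  { destruct (Rlt_le_dec (d * D) 1) as [Hsmall | Hlarge].
    - assert (d * INR B >= d) by nra. nra.
    - specialize (HB2 Hlarge). nra. }
  assert (d * (D + INR B) <= d * INR (n - i')) by (apply Rmult_le_compat_l; lra). lra.
Qed.

Lemma ratio_potential_step a n d k i i' : 0 < d -> (1 <= i <= n)%nat -> 0 < a i -> (i' < i)%nat ->
  ((1 <= i')%nat -> a i' * (1 + d) < a i) ->
  ratio_potential a n d k i -> ratio_potential a n d (S k) i'.
Proof.
  intros Hd Hi Hai Hi' Hdrop [P2 P3]. split.
  - intros Hi1. simpl pow.
    assert (0 <= (1 + d) ^ k) by (apply pow_le; lra).
    specialize (P2 ltac:(lia)). specialize (Hdrop Hi1).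
    assert ((1 + d) ^ k * (a i' * (1 + d)) <= (1 + d) ^ k * a i) by (apply Rmult_le_compat_l; lra).
    nra.
  - intros _. exists i. split; [lia|]. split; [lra|]. simpl. rewrite Nat.sub_0_r. apply P2. lia.
Qed.

Lemma maxR_sorted a n k : sorted_nonneg a n -> (1 <= k <= n)%nat -> maxR a k = a k.
Proof.
  intros Hs. induction k as [|k IH]; intros Hk; [lia|].
  simpl. destruct k as [|k].
  - apply Rmax_right. apply (sorted_ge0 a n); [assumption|lia].
  - rewrite IH by lia. apply Rmax_right. apply (sorted_le a n); [assumption|lia..].
Qed.

Lemma minpos_Some a k xm : minpos a k = Some xm -> 0 < xm /\ exists j, (1 <= j <= k)%nat /\ xm = a j.
Proof.
  revert xm. induction k as [|k IH]; intros xm H; simpl in H; [discriminate|].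
  destruct (Rlt_dec 0 (a (S k))).
  - destruct (minpos a k) as [v|] eqn:E; injection H as <-.
    + destruct (IH v eq_refl) as [Hv [j [Hj ->]]].
      unfold Rmin. destruct (Rle_dec (a j) (a (S k))).
      * split; [lra|]. exists j. split; [lia|reflexivity].
      * split; [lra|]. exists (S k). split; [lia|reflexivity].
    + split; [lra|]. exists (S k). split; [lia|reflexivity].
  - destruct (IH xm H) as [Hv [j [Hj ->]]]. split; [lra|]. exists j. split; [lia|reflexivity].
Qed.

Lemma minpos_neq_None a k j : (1 <= j <= k)%nat -> 0 < a j -> minpos a k <> None.
Proof.
  induction k; intros; [lia|]. simpl.
  destruct (Rlt_dec 0 (a (S k))); [destruct (minpos a k); discriminate|].
  destruct (Nat.eq_dec j (S k)) as [->|]; [contradiction|]. apply IHk; [lia|lra].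
Qed.

Lemma minpos_le a k xm : minpos a k = Some xm -> forall j, (1 <= j <= k)%nat -> 0 < a j -> xm <= a j.
Proof.
  revert xm. induction k as [|k IH]; intros xm H j Hj Haj; simpl in H; [discriminate|].
  destruct (Rlt_dec 0 (a (S k))).
  - destruct (minpos a k) as [v|] eqn:E; injection H as <-.
    + destruct (Nat.eq_dec j (S k)) as [->|Hne].
      * apply Rmin_r.
      * eapply Rle_trans; [apply Rmin_l|]. apply (IH v eq_refl); [lia|lra].
    + destruct (Nat.eq_dec j (S k)) as [->|Hne]; [lra|].
      exfalso. apply (minpos_neq_None a k j); [lia|lra|assumption].
  - destruct (Nat.eq_dec j (S k)) as [->|Hne]; [contradiction|].
    apply (IH xm H); [lia|lra].
Qed.

Definition log_ratio_sorted a n := match minpos a n with None => 0 | Some xm => ln (a n / xm) end.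

Lemma log_ratio_eq_sorted a n : sorted_nonneg a n -> (1 <= n)%nat -> log_ratio a n = log_ratio_sorted a n.
Proof. intros. unfold log_ratio. rewrite (maxR_sorted a n n) by (auto; lia). reflexivity. Qed.

Lemma log_ratio_sorted_ge0 a n : sorted_nonneg a n -> 0 <= log_ratio_sorted a n.
Proof.
  intros Hs. unfold log_ratio_sorted. destruct (minpos a n) as [xm|] eqn:E; [|lra].
  destruct (minpos_Some a n xm E) as [Hx [j [Hj ->]]].
  apply ln_div_ge_0; [lra|]. apply (sorted_le a n); [assumption|lia..].
Qed.

Definition rounds_count_bound n (d : R) := ln (1 + INR n) / ln (1 + d / 4).
Definition rounds_ratio_bound a n (d : R) :=
  match minpos a n with None => 0 | Some _ => 1 + log_ratio_sorted a n / ln (1 + d) end.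
Definition rounds_bound a n d := Rmin (rounds_count_bound n d) (rounds_ratio_bound a n d).

Lemma ln_1_add_pos x : 0 < x -> 0 < ln (1 + x).
Proof. intros. rewrite <- ln_1. apply ln_increasing; lra. Qed.

Lemma count_potential_rounds n d k i : 0 < d <= 1 -> (i <= n)%nat ->
  count_potential d n k i -> INR k <= rounds_count_bound n d.
Proof.
  intros Hd Hi P1. unfold rounds_count_bound, count_potential in *.
  apply Rle_div_of_mul; [apply ln_1_add_pos; lra|].
  rewrite <- ln_pow by lra. apply ln_le; [apply pow_lt; lra|].
  assert (INR (n - i) <= INR n) by (apply le_INR; lia).
  assert (d * INR (n - i) <= INR n) by (pose proof (pos_INR (n - i)); nra). lra.
Qed.

Lemma ratio_potential_rounds a n d k i : 0 < d -> sorted_nonneg a n ->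
  ratio_potential a n d k i -> INR k <= rounds_ratio_bound a n d.
Proof.
  intros Hd Hs [_ P3]. pose proof (ln_1_add_pos d Hd) as Hl.
  pose proof (log_ratio_sorted_ge0 a n Hs) as H0.
  unfold rounds_ratio_bound. unfold log_ratio_sorted in *. destruct k as [|k].
  - destruct (minpos a n); [|simpl; lra].
    pose proof (Rdiv_ge_0 _ _ H0 Hl). simpl. lra.
  - destruct (P3 ltac:(lia)) as [j [Hj [Haj Hp]]].
    destruct (minpos a n) as [xm|] eqn:E; [|exfalso; apply (minpos_neq_None a n j); assumption].
    pose proof (minpos_le a n xm E j Hj Haj) as Hxj.
    destruct (minpos_Some a n xm E) as [Hx _].
    rewrite S_INR. simpl in Hp. rewrite Nat.sub_0_r in Hp.
    assert (Hq : (1 + d) ^ k <= a n / xm).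
    { apply Rle_div_of_mul; [lra|].
      assert (0 <= (1 + d) ^ k) by (apply pow_le; lra).
      assert ((1 + d) ^ k * xm <= (1 + d) ^ k * a j) by (apply Rmult_le_compat_l; lra). lra. }
    assert (INR k <= ln (a n / xm) / ln (1 + d)).
    { apply Rle_div_of_mul; [lra|]. rewrite <- ln_pow by lra. apply ln_le; [apply pow_lt; lra|exact Hq]. }
    lra.
Qed.

Lemma potentials_rounds a n d k i : 0 < d <= 1 -> sorted_nonneg a n -> (i <= n)%nat ->
  count_potential d n k i -> ratio_potential a n d k i -> INR k <= rounds_bound a n d.
Proof.
  intros. apply Rmin_glb; [eapply count_potential_rounds | eapply ratio_potential_rounds]; eauto; lra.
Qed.

Definition round_progress a n d i O i' O' :=
  (i' < i)%nat /\ (approx_inv a n d i O -> approx_inv a n d i' O') /\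
  forall k, count_potential d n k i -> ratio_potential a n d k i ->
    count_potential d n (S k) i' /\ ratio_potential a n d (S k) i'.

Definition block_size_ok n (d : R) i B :=
  (1 <= B)%nat /\ (B = 1%nat \/ INR B <= d * INR (n - i)) /\
  (1 <= d * INR (n - i) -> d * INR (n - i) / 2 <= INR B).

Lemma round_progress_intro a n d i O i' O' B : 0 < d -> (1 <= i <= n)%nat -> 0 < a i -> (i' < i)%nat ->
  ((1 <= i')%nat -> a i' * (1 + d) < a i) -> (n - i + B <= n - i')%nat -> block_size_ok n d i B ->
  (approx_inv a n d i O -> approx_inv a n d i' O') -> round_progress a n d i O i' O'.
Proof.
  intros Hd Hi Hai Hi' Hdrop Hadv (HB1 & _ & HB3) HI. split; [exact Hi'|]. split; [exact HI|].
  intros k P1 P2. split.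
  - apply (count_potential_step n d k i i' B Hd Hadv); [apply (le_INR 1); exact HB1|exact HB3|exact P1].
  - exact (ratio_potential_step a n d k i i' Hd Hi Hai Hi' Hdrop P2).
Qed.

Definition tower (j : nat) : nat := (2 ^ (2 ^ j))%nat.

Lemma tower_0 : tower 0 = 2%nat. Proof. reflexivity. Qed.

Lemma tower_S j : tower (S j) = (tower j * tower j)%nat.
Proof. unfold tower. rewrite Nat.pow_succ_r', <- Nat.pow_add_r. f_equal. lia. Qed.

Lemma tower_ge_2 j : (2 <= tower j)%nat.
Proof. induction j; [unfold tower; simpl; lia|]. rewrite tower_S. nia. Qed.

Definition gallop_len_bound n := 2 + ln (1 + ln (INR n)) / ln 2.
Definition bisect_len_bound (d : R) := 2 + ln (/ d) / ln 2.
Definition round_cost_bound n d := 100 * (1 + gallop_len_bound n + bisect_len_bound d).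

Lemma gallop_len_bound_ge_2 n : (1 <= n)%nat -> 2 <= gallop_len_bound n.
Proof.
  intros. unfold gallop_len_bound. pose proof ln_lt_2.
  assert (0 <= ln (INR n)) by (apply ln_ge_0; apply (le_INR 1); lia).
  assert (0 <= ln (1 + ln (INR n))) by (apply ln_ge_0; lra).
  pose proof (Rdiv_ge_0 (ln (1 + ln (INR n))) (ln 2) ltac:(lra) ltac:(lra)). lra.
Qed.

Lemma bisect_len_bound_ge_2 d : 0 < d <= 1 -> 2 <= bisect_len_bound d.
Proof.
  intros. unfold bisect_len_bound. pose proof ln_lt_2.
  assert (0 <= ln (/ d)) by (apply ln_ge_0; rewrite <- Rinv_1; apply Rinv_le_contravar; lra).
  pose proof (Rdiv_ge_0 (ln (/ d)) (ln 2) ltac:(lra) ltac:(lra)). lra.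
Qed.

Lemma round_cost_bound_ge n d : (1 <= n)%nat -> 0 < d <= 1 -> 500 <= round_cost_bound n d.
Proof.
  intros Hn Hd. unfold round_cost_bound.
  pose proof (gallop_len_bound_ge_2 n Hn). pose proof (bisect_len_bound_ge_2 d Hd). lra.
Qed.

Lemma gallop_len_le n j : (tower j <= n)%nat -> INR j + 1 <= gallop_len_bound n.
Proof.
  intros H. apply le_INR in H. unfold tower in H. rewrite pow_INR in H.
  replace (INR 2) with 2 in H by (simpl; lra). pose proof ln_lt_2.
  assert (H1 : INR (2 ^ j) * ln 2 <= ln (INR n)).
  { rewrite <- ln_pow by lra. apply ln_le; [apply pow_lt; lra|exact H]. }
  rewrite pow_INR in H1. replace (INR 2) with 2 in H1 by (simpl; lra).
  assert (Hp : 1 <= 2 ^ j) by (apply pow_R1_Rle; lra).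
  assert (Hlog : 2 ^ j <= 2 * (1 + ln (INR n))).
  { assert (2 ^ j * / 2 <= 2 ^ j * ln 2) by (apply Rmult_le_compat_l; lra). lra. }
  assert (INR j * ln 2 <= ln 2 + ln (1 + ln (INR n))).
  { rewrite <- ln_pow, <- ln_mult by lra. apply ln_le; [apply pow_lt; lra|exact Hlog]. }
  unfold gallop_len_bound.
  assert (INR j - 1 <= ln (1 + ln (INR n)) / ln 2) by (apply Rle_div_of_mul; lra). lra.
Qed.

Lemma bisect_len_le d t : 0 < d -> d * 2 ^ t < 2 -> INR t + 1 <= bisect_len_bound d.
Proof.
  intros Hd H. pose proof ln_lt_2.
  assert (Hl : ln (d * 2 ^ t) < ln 2)
    by (apply ln_increasing; [apply Rmult_lt_0_compat; [lra|apply pow_lt; lra]|lra]).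
  rewrite ln_mult, ln_pow in Hl by (try apply pow_lt; lra).
  unfold bisect_len_bound. rewrite ln_Rinv by lra.
  assert (INR t - 1 <= - ln d / ln 2) by (apply Rle_div_of_mul; lra). lra.
Qed.

(* [J] counts gallop steps, [b] bisection steps; the constants are read off
   the program below. *)
Lemma round_cost_le n d (N J b : nat) : (1 <= n)%nat -> 0 < d <= 1 ->
  (N <= 52 + 27 * J + 14 * b)%nat -> ((1 <= J)%nat -> (tower (J - 1) <= n)%nat) ->
  (b = 0%nat \/ d * 2 ^ (b - 1) < 2) -> INR N <= round_cost_bound n d.
Proof.
  intros Hn Hd HN HJ Hb.
  pose proof (gallop_len_bound_ge_2 n Hn). pose proof (bisect_len_bound_ge_2 d Hd).
  assert (HJm : INR J <= gallop_len_bound n).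
  { destruct J as [|J]; [simpl; lra|].
    replace (S J - 1)%nat with J in HJ by lia. rewrite S_INR. apply gallop_len_le, HJ. lia. }
  assert (Hbm : INR b <= bisect_len_bound d).
  { destruct b as [|b]; [simpl; lra|].
    destruct Hb as [Hb|Hb]; [discriminate|].
    replace (S b - 1)%nat with b in Hb by lia. rewrite S_INR. apply bisect_len_le; lra. }
  apply le_INR in HN. rewrite !plus_INR, !mult_INR in HN.
  unfold round_cost_bound. pose proof (pos_INR J). pose proof (pos_INR b).
  replace (INR 27) with 27 in HN by (simpl; lra). replace (INR 14) with 14 in HN by (simpl; lra).
  replace (INR 52) with 52 in HN by (simpl; lra). lra.
Qed.

Lemma rounds_count_bound_le n eps : (1 <= n)%nat -> 0 < eps < 1 ->
  rounds_count_bound n (eps / 3) <= 24 * / eps * (1 + ln (INR n)).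
Proof.
  intros Hn He. unfold rounds_count_bound.
  assert (H1 : 1 <= INR n) by (apply (le_INR 1); lia).
  assert (Hln : ln (1 + INR n) <= 1 + ln (INR n)).
  { assert (ln (1 + INR n) <= ln (2 * INR n)) by (apply ln_le; lra).
    rewrite ln_mult in H by lra. pose proof (ln_le_sub_1 2). lra. }
  assert (eps / 3 / 4 / 2 <= ln (1 + eps / 3 / 4)) by (apply ln_1_add_ge_half; lra).
  eapply Rle_trans; [apply (Rdiv_le_den _ (eps / 3 / 4 / 2)); [apply ln_ge_0|..]; lra|].
  replace (ln (1 + INR n) / (eps / 3 / 4 / 2)) with (24 * / eps * ln (1 + INR n)) by (field; lra).
  apply Rmult_le_compat_l; [|exact Hln]. pose proof (Rinv_0_lt_compat eps). lra.
Qed.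

Lemma rounds_ratio_bound_le a n eps : 0 < eps < 1 -> sorted_nonneg a n ->
  rounds_ratio_bound a n (eps / 3) <= 1 + 6 * / eps * log_ratio_sorted a n.
Proof.
  intros He Hs. pose proof (log_ratio_sorted_ge0 a n Hs) as H0.
  assert (0 <= 6 * / eps * log_ratio_sorted a n)
    by (apply Rmult_le_pos; [pose proof (Rinv_0_lt_compat eps); lra|exact H0]).
  unfold rounds_ratio_bound. destruct (minpos a n); [|lra].
  assert (eps / 3 / 2 <= ln (1 + eps / 3)) by (apply ln_1_add_ge_half; lra).
  assert (log_ratio_sorted a n / ln (1 + eps / 3) <= log_ratio_sorted a n / (eps / 3 / 2))
    by (apply Rdiv_le_den; lra).
  replace (log_ratio_sorted a n / (eps / 3 / 2)) with (6 * / eps * log_ratio_sorted a n)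
    in H2 by (field; lra). lra.
Qed.

Lemma rounds_bound_ge0 a n d : 0 < d -> sorted_nonneg a n -> 0 <= rounds_bound a n d.
Proof.
  intros Hd Hs. unfold rounds_bound, rounds_count_bound, rounds_ratio_bound. apply Rmin_case.
  - apply Rdiv_ge_0; [apply ln_ge_0; pose proof (pos_INR n); lra|apply ln_1_add_pos; lra].
  - destruct (minpos a n); [|lra].
    pose proof (Rdiv_ge_0 _ _ (log_ratio_sorted_ge0 a n Hs) (ln_1_add_pos d Hd)). lra.
Qed.

Lemma rounds_bound_le a n eps : (1 <= n)%nat -> 0 < eps < 1 -> sorted_nonneg a n ->
  rounds_bound a n (eps / 3) + 1 <= 25 * / eps * (1 + Rmin (ln (INR n)) (log_ratio a n)).
Proof.
  intros Hn He Hs. rewrite log_ratio_eq_sorted by assumption.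
  pose proof (rounds_count_bound_le n eps Hn He).
  pose proof (rounds_ratio_bound_le a n eps He Hs).
  assert (HLn : 0 <= ln (INR n)) by (apply ln_ge_0, (le_INR 1); lia).
  pose proof (log_ratio_sorted_ge0 a n Hs).
  assert (Hie : 1 <= / eps) by (rewrite <- Rinv_1; apply Rinv_le_contravar; lra).
  pose proof (Rmin_l (rounds_count_bound n (eps / 3)) (rounds_ratio_bound a n (eps / 3))).
  pose proof (Rmin_r (rounds_count_bound n (eps / 3)) (rounds_ratio_bound a n (eps / 3))).
  unfold rounds_bound.
  destruct (Rle_lt_dec (ln (INR n)) (log_ratio_sorted a n)) as [h|h];
    [rewrite (Rmin_left (ln (INR n))) by lra | rewrite (Rmin_right (ln (INR n))) by lra].
  - assert (/ eps * 1 <= / eps * (1 + ln (INR n))) by (apply Rmult_le_compat_l; lra). lra.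
  - assert (/ eps * 1 <= / eps * (1 + log_ratio_sorted a n)) by (apply Rmult_le_compat_l; lra). lra.
Qed.

Lemma round_cost_bound_le n eps : (1 <= n)%nat -> 0 < eps < 1 ->
  round_cost_bound n (eps / 3) <= 900 * (1 + ln (/ eps) + ln (1 + ln (INR n))).
Proof.
  intros Hn He. unfold round_cost_bound, gallop_len_bound, bisect_len_bound.
  assert (HLn : 0 <= ln (INR n)) by (apply ln_ge_0, (le_INR 1); lia).
  assert (HLL : 0 <= ln (1 + ln (INR n))) by (apply ln_ge_0; lra).
  assert (HLe : 0 <= ln (/ eps)) by (apply ln_ge_0; rewrite <- Rinv_1; apply Rinv_le_contravar; lra).
  assert (Hln3 : 0 <= ln 3 <= 2) by (split; [apply ln_ge_0; lra|pose proof (ln_le_sub_1 3); lra]).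
  assert (E : ln (/ (eps / 3)) = ln 3 + ln (/ eps)).
  { replace (/ (eps / 3)) with (3 * / eps) by (field; lra).
    apply ln_mult; [lra|apply Rinv_0_lt_compat; lra]. }
  pose proof (div_ln2_le _ HLL). rewrite E. pose proof (div_ln2_le (ln 3 + ln (/ eps)) ltac:(lra)).
  lra.
Qed.

Lemma total_cost_le n eps a : (1 <= n)%nat -> 0 < eps < 1 -> sorted_nonneg a n ->
  7 + (rounds_bound a n (eps / 3) + 1) * round_cost_bound n (eps / 3)
    <= 30000 * time_bound eps n (log_ratio a n).
Proof.
  intros Hn He Hs. unfold time_bound.
  pose proof (rounds_bound_le a n eps Hn He Hs) as HK.
  pose proof (round_cost_bound_le n eps Hn He) as HC.
  pose proof (rounds_bound_ge0 a n (eps / 3) ltac:(lra) Hs).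
  pose proof (round_cost_bound_ge n (eps / 3) Hn ltac:(lra)).
  set (A := 1 + Rmin (ln (INR n)) (log_ratio a n)) in *.
  set (Th := 1 + ln (/ eps) + ln (1 + ln (INR n))) in *.
  assert (HA : 1 <= A).
  { unfold A. rewrite log_ratio_eq_sorted by assumption. pose proof (log_ratio_sorted_ge0 a n Hs).
    assert (0 <= ln (INR n)) by (apply ln_ge_0, (le_INR 1); lia). apply Rmin_case; lra. }
  assert (Hie : 1 <= / eps) by (rewrite <- Rinv_1; apply Rinv_le_contravar; lra).
  assert (1 <= / eps * A) by nra.
  assert (1 <= Th).
  { unfold Th. assert (0 <= ln (INR n)) by (apply ln_ge_0, (le_INR 1); lia).
    assert (0 <= ln (/ eps)) by (apply ln_ge_0; lra).
    assert (0 <= ln (1 + ln (INR n))) by (apply ln_ge_0; lra). lra. }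
  assert ((rounds_bound a n (eps / 3) + 1) * round_cost_bound n (eps / 3) <= (25 * / eps * A) * (900 * Th))
    by (apply Rmult_le_compat; lra).
  nra.
Qed.

(* Register map: r0 = n, r1 = eps, r2 = 1, r3 = 2, r4 = 1 + d, r5 = d with
   d = eps/3, r6 = i, r7 = O, r8 = a i, r9 = a 1, r10/r11 = query index and
   answer, r12 = B, r13/r14 = previous/current tower value of the gallop,
   r15 = stack of earlier tower values (see [tower_stack]), r16/r17 = block
   length factor and tower value of the descent, r20/r21/r22 = lo/hi/gap or midpoint of
   the bisection, r18, r19, r23, r24 = scratch.
   Layout: 0-6 setup; 7 round head; 12-14 charge the whole prefix at [a 1];
   15-21 block length [B]; 22-26 block test; 27-41 gallop; 42-58 descent;
   59-81 bisection; 82-94 charge the two blocks found by the search;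
   95-98 charge a block of length [B]; 99 halt. *)
Definition prog : program := [
 (*0*) IConst1 2; IAdd 3 2 2; IAdd 23 3 2; IDiv 5 1 23; IAdd 4 2 5;
 (*5*) IConst0 7; IMul 6 0 2; IJlt 6 2 99; IQuery 9 2; IQuery 8 6;
 (*10*) IMul 23 9 4; IJlt 23 8 15; IMul 23 6 9; IAdd 7 7 23; IHalt 7;
 (*15*) ISub 23 0 6; IMul 23 5 23; IFloor 12 23; IJlt 2 12 20; IConst1 12;
 (*20*) IJlt 12 6 22; IJmp 12; ISub 10 6 12; IAdd 10 10 2; IQuery 11 10;
 (*25*) IMul 23 11 4; IJlt 23 8 95; IConst1 13; IAdd 14 2 2; IConst0 15;
 (*30*) IMul 19 12 14; IJlt 6 19 42; ISub 10 6 19; IAdd 10 10 2; IQuery 11 10;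
 (*35*) IMul 23 11 4; IJlt 23 8 42; IDiv 24 15 14; IAdd 15 13 24; IMul 13 14 2;
 (*40*) IMul 14 14 14; IJmp 30; IMul 16 13 2; IMul 17 13 2; IFloor 18 15;
 (*45*) IJlt 18 3 59; IMul 19 12 16; IMul 19 19 18; IJlt 6 19 55; ISub 10 6 19;
 (*50*) IAdd 10 10 2; IQuery 11 10; IMul 23 11 4; IJlt 23 8 55; IMul 16 16 18;
 (*55*) ISub 24 15 18; IMul 15 24 17; IMul 17 18 2; IJmp 44; IMul 20 12 16;
 (*60*) IMul 21 20 3; IJlt 6 21 63; IJmp 64; IMul 21 6 2; ISub 22 21 20;
 (*65*) IJlt 2 22 67; IJmp 82; IMul 23 5 20; IJlt 23 22 70; IJmp 82;
 (*70*) IAdd 22 20 21; IDiv 22 22 3; IFloor 22 22; ISub 10 6 22; IAdd 10 10 2;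
 (*75*) IQuery 11 10; IMul 23 11 4; IJlt 23 8 80; IMul 20 22 2; IJmp 64;
 (*80*) IMul 21 22 2; IJmp 64; ISub 10 6 20; IAdd 10 10 2; IQuery 11 10;
 (*85*) IMul 23 20 11; IAdd 7 7 23; ISub 10 6 21; IAdd 10 10 2; IQuery 11 10;
 (*90*) ISub 24 21 20; IMul 23 24 11; IAdd 7 7 23; ISub 6 6 21; IJmp 7;
 (*95*) IMul 23 12 11; IAdd 7 7 23; ISub 6 6 12; IJmp 7; IHalt 7 ].

Lemma run_S p a f pc r : run p a (S f) pc r =
  match nth_error p pc with None => None | Some i =>
      match i with
      | IConst0 d => run p a f (S pc) (upd r d 0)
      | IConst1 d => run p a f (S pc) (upd r d 1)
      | IAdd d x y => run p a f (S pc) (upd r d (r x + r y))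
      | ISub d x y => run p a f (S pc) (upd r d (r x - r y))
      | IMul d x y => run p a f (S pc) (upd r d (r x * r y))
      | IDiv d x y => run p a f (S pc) (upd r d (r x / r y))
      | IFloor d x => run p a f (S pc) (upd r d (floorR (r x)))
      | IQuery d x => run p a f (S pc) (upd r d (a (Z.to_nat (Int_part (r x)))))
      | IJlt x y t => if Rlt_dec (r x) (r y) then run p a f t r
                      else run p a f (S pc) r
      | IJmp t => run p a f t r
      | IHalt x => Some (r x)
      end end.
Proof. reflexivity. Qed.

Lemma upd_hit r d v k : Nat.eqb k d = true -> upd r d v k = v.
Proof. unfold upd. intros ->. reflexivity. Qed.

Lemma upd_miss r d v k : Nat.eqb k d = false -> upd r d v k = r k.
Proof. unfold upd. intros ->. reflexivity. Qed.

Ltac simpl_upd := repeat match goal with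
  | |- context [upd ?r ?d ?v ?k] =>
      first [rewrite (upd_hit r d v k) by reflexivity | rewrite (upd_miss r d v k) by reflexivity]
  end.
Ltac simpl_upd_in H := repeat match type of H with
  | context [upd ?r ?d ?v ?k] =>
      first [rewrite (upd_hit r d v k) in H by reflexivity | rewrite (upd_miss r d v k) in H by reflexivity]
  end.

Ltac step := cbn [Nat.add]; rewrite run_S;
  match goal with |- context[nth_error prog ?k] =>
    let e := eval vm_compute in (nth_error prog k) in change (nth_error prog k) with e end;
  cbv iota beta.

Definition tower_prev (j : nat) : nat := match j with O => 1%nat | S j' => tower j' end.

(* The gallop stores the tower values it passes in a single register: the
   descent pops [tower u] as the integer part and recovers the rest by
   subtracting and multiplying back, avoiding square roots. *)
Fixpoint tower_stack (j : nat) : R :=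
  match j with O => 0 | S j' => INR (tower_prev j') + tower_stack j' / INR (tower j') end.

Lemma tower_prev_lt j : (tower_prev j < tower j)%nat.
Proof.
  destruct j; simpl; [pose proof (tower_ge_2 0); lia|].
  rewrite tower_S. pose proof (tower_ge_2 j). nia.
Qed.

Lemma tower_prev_ge_1 j : (1 <= tower_prev j)%nat.
Proof. destruct j; simpl; [lia|]. pose proof (tower_ge_2 j); lia. Qed.

Lemma tower_prev_mul j : (tower_prev j * tower (j - 1))%nat = tower j.
Proof. destruct j; [reflexivity|]. simpl tower_prev. replace (S j - 1)%nat with j by lia. now rewrite tower_S. Qed.

Lemma frac_bounds (x y : R) : 0 <= x < y -> 0 <= x / y < 1.
Proof.
  intros Hx. split; [apply Rdiv_ge_0; lra|].
  apply (Rmult_lt_reg_r y); [lra|]. unfold Rdiv. rewrite Rmult_assoc, Rinv_l by lra. lra.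
Qed.

Lemma tower_stack_bounds j : 0 <= tower_stack j < INR (tower j).
Proof.
  induction j; simpl tower_stack.
  - unfold tower. simpl. lra.
  - pose proof (frac_bounds _ _ IHj).
    assert (H1 : (tower_prev j + 1 <= tower (S j))%nat).
    { rewrite tower_S. pose proof (tower_prev_lt j). pose proof (tower_ge_2 j). nia. }
    apply le_INR in H1. rewrite plus_INR in H1. simpl (INR 1) in H1.
    pose proof (pos_INR (tower_prev j)). lra.
Qed.

Lemma tower_stack_pop u : floorR (tower_stack (S (S u))) = INR (tower u) /\
  (tower_stack (S (S u)) - INR (tower u)) * INR (tower (S u)) = tower_stack (S u).
Proof.
  pose proof (tower_stack_bounds (S u)) as Hb. change (tower_stack (S (S u))) with
    (INR (tower u) + tower_stack (S u) / INR (tower (S u))).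
  split; [apply floorR_INR_add, frac_bounds, Hb|]. field. lra.
Qed.

Definition runs_to a N pc r pc' r' := forall f, run prog a (N + f) pc r = run prog a f pc' r'.

Lemma runs_to_trans a N1 N2 p1 p2 p3 r1 r2 r3 :
  runs_to a N1 p1 r1 p2 r2 -> runs_to a N2 p2 r2 p3 r3 -> runs_to a (N1 + N2) p1 r1 p3 r3.
Proof. intros H1 H2 f. rewrite <- Nat.add_assoc, H1. apply H2. Qed.

Lemma runs_to_halt a N1 N2 p1 p2 r1 r2 s :
  runs_to a N1 p1 r1 p2 r2 -> run prog a N2 p2 r2 = Some s -> run prog a (N1 + N2) p1 r1 = Some s.
Proof. intros H1 H2. rewrite H1. exact H2. Qed.

Ltac branch c := destruct (Rlt_dec _ _) as [c|c]; simpl_upd_in c.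

Lemma query_index_sub i L : (L <= i)%nat -> Z.to_nat (Int_part (INR i - INR L + 1)) = (i - L + 1)%nat.
Proof.
  intros. replace (INR i - INR L + 1) with (INR (i - L + 1)) by (rewrite plus_INR, minus_INR by lia; simpl; lra).
  apply Int_part_INR_to_nat.
Qed.

(* Registers that stay fixed during a round ([outer_regs]) and during its
   search phase ([inner_regs]). *)
Definition outer_regs (r : regs) n d i O :=
  r 0%nat = INR n /\ r 2%nat = 1 /\ r 3%nat = 2 /\ r 4%nat = 1 + d /\ r 5%nat = d /\
  r 6%nat = INR i /\ r 7%nat = O.

Definition not_outer_reg (k : nat) : bool :=
  negb (Nat.eqb k 0) && negb (Nat.eqb k 2) && negb (Nat.eqb k 3) && negb (Nat.eqb k 4) &&
  negb (Nat.eqb k 5) && negb (Nat.eqb k 6) && negb (Nat.eqb k 7).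

Ltac split_reg_test Hk :=
  repeat match type of Hk with
  | andb _ _ = true => apply andb_prop in Hk; destruct Hk as [Hk ?]
  end;
  repeat match goal with H : negb _ = true |- _ => apply Bool.negb_true_iff in H; rewrite Nat.eqb_sym in H end.

Lemma outer_regs_upd r n d i O k v :
  not_outer_reg k = true -> outer_regs r n d i O -> outer_regs (upd r k v) n d i O.
Proof.
  intros Hk Hb. unfold not_outer_reg in Hk. split_reg_test Hk. unfold outer_regs, upd in *.
  repeat match goal with H : Nat.eqb _ _ = false |- _ => rewrite H; clear H end. exact Hb.
Qed.

Ltac keep_outer := repeat (apply outer_regs_upd; [reflexivity|]).

Definition inner_regs (r : regs) n d i O ai B :=
  r 0%nat = INR n /\ r 2%nat = 1 /\ r 3%nat = 2 /\ r 4%nat = 1 + d /\ r 5%nat = d /\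
  r 6%nat = INR i /\ r 7%nat = O /\ r 8%nat = ai /\ r 12%nat = INR B.

Definition not_inner_reg (k : nat) : bool :=
  not_outer_reg k && negb (Nat.eqb k 8) && negb (Nat.eqb k 12).

Lemma inner_regs_upd r n d i O ai B k v :
  not_inner_reg k = true -> inner_regs r n d i O ai B -> inner_regs (upd r k v) n d i O ai B.
Proof.
  intros Hk Hb. unfold not_inner_reg, not_outer_reg in Hk. split_reg_test Hk. unfold inner_regs, upd in *.
  repeat match goal with H : Nat.eqb _ _ = false |- _ => rewrite H; clear H end. exact Hb.
Qed.

Ltac keep_inner := repeat (apply inner_regs_upd; [reflexivity|]).

Lemma run_halt_prefix a r n d i O : outer_regs r n d i O -> r 9%nat = a 1%nat -> run prog a 3 12 r = Some (O + INR i * a 1%nat).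
Proof.
  intros (H0 & H2 & H3 & H4 & H5 & H6 & H7) H9. step. step. step. simpl_upd. rewrite H7, H6, H9. reflexivity.
Qed.

Lemma run_round_head a r n d i O : outer_regs r n d i O -> (1 <= i)%nat ->
  (~ (a 1%nat * (1 + d) < a i) /\ run prog a 8 7 r = Some (O + INR i * a 1%nat)) \/
  (a 1%nat * (1 + d) < a i /\ exists r1, runs_to a 5 7 r 15 r1 /\
     outer_regs r1 n d i O /\ r1 8%nat = a i /\ r1 9%nat = a 1%nat).
Proof.
  intros Hb Hi. pose proof Hb as (H0 & H2 & H3 & H4 & H5 & H6 & H7).
  assert (Hi1 : ~ INR i < 1) by (apply (le_INR 1) in Hi; simpl in Hi; lra).
  assert (E1 : Z.to_nat (Int_part 1) = 1%nat) by (change 1 with (INR 1); apply Int_part_INR_to_nat).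
  destruct (Rlt_dec (a 1%nat * (1 + d)) (a i)) as [cq|cq].
  - right. split; [exact cq|]. eexists. split.
    { intros f. step. rewrite H6, H2. branch cx1; [contradiction|]. step. step. simpl_upd.
      rewrite ?H2, ?H6, ?E1, ?Int_part_INR_to_nat. step. step. simpl_upd. rewrite ?H4. branch cx2; [reflexivity|contradiction]. }
    split; [keep_outer; exact Hb|]. simpl_upd. rewrite ?H6, ?H2, ?E1, ?Int_part_INR_to_nat. split; reflexivity.
  - left. split; [exact cq|].
    change 8%nat with (5 + 3)%nat.
    assert (Hr : runs_to a 5 7 r 12 (upd (upd (upd r 9 (a 1%nat)) 8 (a i)) 23 (a 1%nat * (1 + d)))).
    { intros f. step. rewrite H6, H2. branch cx1; [contradiction|]. step. step. simpl_upd.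
      rewrite ?H2, ?H6, ?E1, ?Int_part_INR_to_nat. step. step. simpl_upd. rewrite ?H4. branch cx2; [contradiction|reflexivity]. }
    rewrite Hr. apply (run_halt_prefix a _ n d); [keep_outer; exact Hb|]. simpl_upd. reflexivity.
Qed.

Lemma run_block_size a r n d i O : 0 < d -> outer_regs r n d i O -> (i <= n)%nat ->
  exists N B r2, (N <= 5)%nat /\ runs_to a N 15 r 20 r2 /\
  block_size_ok n d i B /\ outer_regs r2 n d i O /\ r2 8%nat = r 8%nat /\ r2 9%nat = r 9%nat /\ r2 12%nat = INR B.
Proof.
  intros Hd Hb Hin. pose proof Hb as (H0 & H2 & H3 & H4 & H5 & H6 & H7).
  assert (Em : INR n - INR i = INR (n - i)) by (rewrite minus_INR by lia; reflexivity).
  assert (Hx : 0 <= d * INR (n - i)) by (apply Rmult_le_pos; [lra|apply pos_INR]).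
  destruct (floorR_nonneg_nat _ Hx) as (k & Hk & Hk1 & Hk2).
  destruct (Rlt_dec 1 (INR k)) as [ck|ck].
  - exists 4%nat, k. eexists. split; [lia|]. split.
    { intros f. step. step. step. step. simpl_upd. rewrite ?H0, ?H6, ?Em, ?H5, ?Hk, ?H2. branch cx; [reflexivity|contradiction]. }
    split.
    { split; [apply INR_le; simpl; lra|]. split; [right; lra|]. intros. lra. }
    split; [keep_outer; exact Hb|]. simpl_upd. rewrite ?H0, ?H6, ?Em, ?H5, ?Hk. auto.
  - exists 5%nat, 1%nat. eexists. split; [lia|]. split.
    { intros f. step. step. step. step. simpl_upd. rewrite ?H0, ?H6, ?Em, ?H5, ?Hk, ?H2. branch cx; [contradiction|].
      step. reflexivity. }
    split.
    { split; [lia|]. split; [left; reflexivity|]. intros. simpl. lra. }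
    split; [keep_outer; exact Hb|]. simpl_upd. auto.
Qed.

Lemma run_block_test a r n d i O B : outer_regs r n d i O -> r 8%nat = a i -> r 9%nat = a 1%nat -> r 12%nat = INR B ->
  (1 <= i <= n)%nat -> (1 <= B)%nat ->
  ((i <= B)%nat /\ run prog a 5 20 r = Some (O + INR i * a 1%nat)) \/
  ((B < i)%nat /\ steep a i d B /\ exists r', runs_to a 10 20 r 7 r' /\
       outer_regs r' n d (i - B) (O + INR B * a (i - B + 1)%nat)) \/
  ((B < i)%nat /\ flat a i d B /\ exists r', runs_to a 6 20 r 27 r' /\
       inner_regs r' n d i O (a i) B).
Proof.
  intros Hb H8 H9 H12 Hi HB. pose proof Hb as (H0 & H2 & H3 & H4 & H5 & H6 & H7).
  destruct (Rlt_dec (INR B) (INR i)) as [c1|c1].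
  - assert (HBi : (B < i)%nat) by (apply INR_lt; exact c1).
    assert (HBi' : (B <= i)%nat) by lia.
    destruct (Rlt_dec (a (i - B + 1)%nat * (1 + d)) (a i)) as [c2|c2].
    + right; left. split; [exact HBi|]. split; [exact c2|]. eexists. split.
      { intros f. step. rewrite H12, H6. branch cx; [|contradiction]. step. step. step. simpl_upd.
        rewrite ?H6, ?H12, ?H2, query_index_sub by exact HBi'. step. step. simpl_upd. rewrite ?H4, ?H8. branch cy; [|contradiction].
        step. step. step. step. reflexivity. }
      keep_outer. unfold outer_regs, upd. simpl. rewrite H0, H2, H3, H4, H5, H6, H7, H12.
      rewrite minus_INR by lia. repeat split; reflexivity.
    + right; right. split; [exact HBi|]. split; [split; [exact HBi'|lra]|]. eexists. split.
      { intros f. step. rewrite H12, H6. branch cx; [|contradiction]. step. step. step. simpl_upd.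
        rewrite ?H6, ?H12, ?H2, query_index_sub by exact HBi'. step. step. simpl_upd. rewrite ?H4, ?H8. branch cy; [contradiction|].
        reflexivity. }
      unfold inner_regs. simpl_upd. rewrite ?H0, ?H2, ?H3, ?H4, ?H5, ?H6, ?H7, ?H8, ?H12. repeat split; reflexivity.
  - left. split; [apply INR_le; lra|].
    step. rewrite H12, H6. branch cx; [contradiction|]. step. apply (run_halt_prefix a _ n d); [exact Hb|exact H9].
Qed.

Lemma run_gallop_init a r n d i O ai B : inner_regs r n d i O ai B ->
  exists r', runs_to a 3 27 r 30 r' /\ inner_regs r' n d i O ai B /\
  r' 13%nat = INR (tower_prev 0) /\ r' 14%nat = INR (tower 0) /\ r' 15%nat = tower_stack 0.
Proof.
  intros Hb. pose proof Hb as (H0 & H2 & H3 & H4 & H5 & H6 & H7 & H8 & H12).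
  eexists. split. { intros f. step. step. step. reflexivity. }
  split; [keep_inner; exact Hb|]. simpl_upd. rewrite H2. simpl. split; [reflexivity|]. split; [|reflexivity].
  unfold tower. simpl. lra.
Qed.

Section Gallop.
Variables (a : nat -> R) (n : nat) (d : R) (i : nat) (O : R) (B : nat).
Hypothesis HB : (1 <= B)%nat.

Lemma gallop_step j r : inner_regs r n d i O (a i) B -> r 13%nat = INR (tower_prev j) -> r 14%nat = INR (tower j) ->
  r 15%nat = tower_stack j ->
  (exists N r1, (N <= 7)%nat /\ runs_to a N 30 r 42 r1 /\
     inner_regs r1 n d i O (a i) B /\ r1 13%nat = INR (tower_prev j) /\ r1 15%nat = tower_stack j /\ ~ flat a i d (B * tower j)) \/
  (flat a i d (B * tower j) /\ exists r1, runs_to a 12 30 r 30 r1 /\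
     inner_regs r1 n d i O (a i) B /\ r1 13%nat = INR (tower_prev (S j)) /\ r1 14%nat = INR (tower (S j)) /\
     r1 15%nat = tower_stack (S j)).
Proof.
  intros Hb H13 H14 H15. pose proof Hb as (H0 & H2 & H3 & H4 & H5 & H6 & H7 & H8 & H12).
  destruct (Rlt_dec (INR i) (INR B * INR (tower j))) as [c1|c1].
  - left. exists 2%nat. eexists. split; [lia|]. split.
    { intros f. step. step. branch c; rewrite H6, H12, H14 in c; [reflexivity|contradiction]. }
    split; [keep_inner; exact Hb|]. simpl_upd. split; [exact H13|]. split; [exact H15|].
    intros [Hle _]. apply le_INR in Hle. rewrite mult_INR in Hle. lra.
  - assert (HL : (B * tower j <= i)%nat).
    { apply INR_le. rewrite mult_INR. lra. }
    destruct (Rlt_dec (a (i - B * tower j + 1)%nat * (1 + d)) (a i)) as [c2|c2].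
    + left. exists 7%nat. eexists. split; [lia|]. split.
      { intros f. step. step. branch c; rewrite H6, H12, H14 in c; [contradiction|].
        step. step. step. step. simpl_upd. rewrite H6, H12, H14, H2. rewrite <- mult_INR, query_index_sub by exact HL.
        step. branch c'; rewrite H4, H8 in c'; [reflexivity|contradiction]. }
      split; [keep_inner; exact Hb|]. simpl_upd. split; [exact H13|]. split; [exact H15|].
      intros [_ Hq]. lra.
    + right. split; [split; [exact HL|lra]|].
      eexists. split.
      { intros f. step. step. branch c; rewrite H6, H12, H14 in c; [contradiction|].
        step. step. step. step. simpl_upd. rewrite H6, H12, H14, H2. rewrite <- mult_INR, query_index_sub by exact HL.
        step. branch c'; rewrite H4, H8 in c'; [contradiction|].
        step. step. step. step. step. reflexivity. }
      split; [keep_inner; exact Hb|]. simpl_upd.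
      rewrite H13, H14, H15, H2. split; [simpl tower_prev; lra|]. split.
      * rewrite tower_S, mult_INR. reflexivity.
      * simpl tower_stack. reflexivity.
Qed.
Lemma gallop_loop M : forall j r, (S i - tower j <= M)%nat -> inner_regs r n d i O (a i) B ->
  r 13%nat = INR (tower_prev j) -> r 14%nat = INR (tower j) -> r 15%nat = tower_stack j ->
  (forall t, (t < j)%nat -> flat a i d (B * tower t)) ->
  exists N J r', runs_to a N 30 r 42 r' /\
    inner_regs r' n d i O (a i) B /\ r' 13%nat = INR (tower_prev J) /\ r' 15%nat = tower_stack J /\
    (forall t, (t < J)%nat -> flat a i d (B * tower t)) /\ ~ flat a i d (B * tower J) /\
    (N <= 12 * (J - j) + 7)%nat /\ (j <= J)%nat.
Proof.
  induction M as [|M IH]; intros j r HM Hb H13 H14 H15 Hall;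
  destruct (gallop_step j r Hb H13 H14 H15) as
    [(N & r1 & HN & Hrun & Hb1 & E13 & E15 & Hnq) | (Hq & r1 & Hrun & Hb1 & E13 & E14 & E15)].
  - exists N, j, r1. refine (conj Hrun (conj Hb1 (conj E13 (conj E15 (conj Hall (conj Hnq (conj _ _))))))); lia.
  - exfalso. destruct Hq as [Hq _]. assert (tower j <= B * tower j)%nat by (apply Nat.le_mul_l; lia). lia.
  - exists N, j, r1. refine (conj Hrun (conj Hb1 (conj E13 (conj E15 (conj Hall (conj Hnq (conj _ _))))))); lia.
  - assert (HM' : (S i - tower (S j) <= M)%nat).
    { destruct Hq as [Hq _]. rewrite tower_S. pose proof (tower_ge_2 j).
      assert (tower j <= B * tower j)%nat by (apply Nat.le_mul_l; lia). nia. }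
    assert (Hall' : forall t, (t < S j)%nat -> flat a i d (B * tower t)).
    { intros t Ht. destruct (Nat.eq_dec t j) as [->|]; [exact Hq|]. apply Hall; lia. }
    destruct (IH (S j) r1 HM' Hb1 E13 E14 E15 Hall') as (N' & J & r' & Hr' & Hb' & F13 & F15 & FA & FN & FC & FJ).
    exists (12 + N')%nat, J, r'. split.
    { exact (runs_to_trans _ _ _ _ _ _ _ _ _ Hrun Hr'). }
    refine (conj Hb' (conj F13 (conj F15 (conj _ (conj FN (conj _ _)))))); [intros t Ht; apply FA; lia|lia|lia].
Qed.
End Gallop.

Lemma run_descend_init a r n d i O ai B J : inner_regs r n d i O ai B -> r 13%nat = INR (tower_prev J) ->
  exists r', runs_to a 2 42 r 44 r' /\ inner_regs r' n d i O ai B /\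
  r' 16%nat = INR (tower_prev J) /\ ((1 <= J)%nat -> r' 17%nat = INR (tower (J - 1))) /\ r' 15%nat = r 15%nat.
Proof.
  intros Hb H13. pose proof Hb as (H0 & H2 & H3 & H4 & H5 & H6 & H7 & H8 & H12).
  eexists. split. { intros f. step. step. reflexivity. }
  split; [keep_inner; exact Hb|]. simpl_upd. rewrite H13, H2. split; [lra|]. split; [|reflexivity].
  intros HJ. destruct J; [lia|]. simpl tower_prev. replace (S J - 1)%nat with J by lia. lra.
Qed.

Section Descent.
Variables (a : nat -> R) (n : nat) (d : R) (i : nat) (O : R) (B : nat).

Lemma descend_exit (t : nat) r : (t <= 1)%nat -> inner_regs r n d i O (a i) B ->
  r 15%nat = tower_stack t -> exists r1, runs_to a 2 44 r 59 r1 /\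
  inner_regs r1 n d i O (a i) B /\ r1 16%nat = r 16%nat.
Proof.
  intros Ht Hb H15. pose proof Hb as (H0 & H2 & H3 & H4 & H5 & H6 & H7 & H8 & H12).
  assert (Hx : floorR (tower_stack t) < 2).
  { destruct t as [|[|t]].
    - simpl tower_stack. replace 0 with (INR 0) by reflexivity. rewrite floorR_INR. simpl. lra.
    - assert (E : tower_stack 1 = INR 1 + 0) by (simpl; unfold Rdiv; ring). rewrite E, floorR_INR_add by lra. simpl. lra.
    - lia. }
  eexists. split.
  { intros f. step. step. simpl_upd. rewrite H15, H3. branch c; [reflexivity|contradiction]. }
  split; [keep_inner; exact Hb|]. simpl_upd. reflexivity.
Qed.

Lemma descend_step m u r : inner_regs r n d i O (a i) B ->
  r 15%nat = tower_stack (S (S u)) -> r 17%nat = INR (tower (S u)) -> r 16%nat = INR m -> (1 <= m)%nat ->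
  flat a i d (B * m) -> ~ flat a i d (B * m * tower (S u)) ->
  exists N r1 m1, (N <= 15)%nat /\ runs_to a N 44 r 44 r1 /\
  inner_regs r1 n d i O (a i) B /\ r1 15%nat = tower_stack (S u) /\ r1 17%nat = INR (tower u) /\
  r1 16%nat = INR m1 /\ (1 <= m1)%nat /\ flat a i d (B * m1) /\ ~ flat a i d (B * m1 * tower u).
Proof.
  intros Hb H15 H17 H16 Hm Hq Hnq. pose proof Hb as (H0 & H2 & H3 & H4 & H5 & H6 & H7 & H8 & H12).
  destruct (tower_stack_pop u) as [Hx Hpop].
  assert (Hx2 : ~ (INR (tower u) < 2)).
  { pose proof (tower_ge_2 u) as H. apply le_INR in H. simpl in H. lra. }
  assert (HL : INR B * INR m * INR (tower u) = INR (B * m * tower u)) by (rewrite !mult_INR; reflexivity).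
  assert (Hsq : (B * m * tower u * tower u = B * m * tower (S u))%nat) by (rewrite tower_S; ring).
  destruct (Rlt_dec (INR i) (INR (B * m * tower u))) as [c1|c1].
  -     exists 9%nat. eexists. exists m. split; [lia|]. split.
    { intros f. step. step. simpl_upd. rewrite H15, H3, Hx. branch c; [contradiction|].
      step. step. step. simpl_upd. rewrite ?H6, ?H12, ?H16, ?HL. branch c'; [|contradiction].
      step. step. step. step. reflexivity. }
    split; [keep_inner; exact Hb|]. simpl_upd. rewrite ?H15, ?H17, ?Hx, ?H2.
    split; [exact Hpop|]. split; [lra|]. split; [exact H16|]. split; [exact Hm|]. split; [exact Hq|].
    intros [Hle _]. apply le_INR in Hle. lra.
  - assert (HLi : (B * m * tower u <= i)%nat) by (apply INR_le; lra).
    destruct (Rlt_dec (a (i - B * m * tower u + 1)%nat * (1 + d)) (a i)) as [c2|c2].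
    + exists 14%nat. eexists. exists m. split; [lia|]. split.
      { intros f. step. step. simpl_upd. rewrite H15, H3, Hx. branch c; [contradiction|].
        step. step. step. simpl_upd. rewrite ?H6, ?H12, ?H16, ?HL. branch c'; [contradiction|].
        step. step. step. step. simpl_upd. rewrite ?H6, ?H2, ?H4, ?H8, ?H12, ?H16, ?H15, ?Hx, ?HL, query_index_sub by exact HLi. step.
        branch c''; rewrite ?H8 in c''; [|contradiction]. step. step. step. step. reflexivity. }
      split; [keep_inner; exact Hb|]. simpl_upd. rewrite ?H15, ?H17, ?Hx, ?H2.
      split; [exact Hpop|]. split; [lra|]. split; [exact H16|]. split; [exact Hm|]. split; [exact Hq|].
      intros [_ Hq']. lra.
    + exists 15%nat. eexists. exists (m * tower u)%nat. split; [lia|]. split.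
      { intros f. step. step. simpl_upd. rewrite H15, H3, Hx. branch c; [contradiction|].
        step. step. step. simpl_upd. rewrite ?H6, ?H12, ?H16, ?HL. branch c'; [contradiction|].
        step. step. step. step. simpl_upd. rewrite ?H6, ?H2, ?H4, ?H8, ?H12, ?H16, ?H15, ?Hx, ?HL, query_index_sub by exact HLi. step.
        branch c''; rewrite ?H8 in c''; [contradiction|]. step. step. step. step. step. reflexivity. }
      split; [keep_inner; exact Hb|]. simpl_upd. rewrite ?H15, ?H17, ?Hx, ?H2, ?H16.
      split; [exact Hpop|]. split; [lra|]. split; [rewrite mult_INR; reflexivity|].
      split; [pose proof (tower_ge_2 u); nia|]. split.
      * rewrite Nat.mul_assoc. split; [exact HLi|lra].
      * rewrite Nat.mul_assoc, Hsq. exact Hnq.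
Qed.

Lemma descend_loop t : forall m r, inner_regs r n d i O (a i) B ->
  r 15%nat = tower_stack t -> ((1 <= t)%nat -> r 17%nat = INR (tower (t - 1))) -> r 16%nat = INR m -> (1 <= m)%nat ->
  flat a i d (B * m) -> ~ flat a i d (B * m * tower (t - 1)) ->
  exists N m' r', runs_to a N 44 r 59 r' /\
  inner_regs r' n d i O (a i) B /\ r' 16%nat = INR m' /\ (1 <= m')%nat /\ flat a i d (B * m') /\
  ~ flat a i d (B * m' * 2) /\ (N <= 15 * t + 2)%nat.
Proof.
  induction t as [t IH] using lt_wf_ind. intros m r Hb H15 H17 H16 Hm Hq Hnq.
  destruct t as [|[|u]].
  - destruct (descend_exit 0 r ltac:(lia) Hb H15) as (r1 & Hr & Hb1 & E16).
    exists 2%nat, m, r1. refine (conj Hr (conj Hb1 (conj _ (conj Hm (conj Hq (conj _ _)))))); [congruence| |lia].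
    rewrite <- tower_0. exact Hnq.
  - destruct (descend_exit 1 r ltac:(lia) Hb H15) as (r1 & Hr & Hb1 & E16).
    exists 2%nat, m, r1. refine (conj Hr (conj Hb1 (conj _ (conj Hm (conj Hq (conj _ _)))))); [congruence| |lia].
    rewrite <- tower_0. exact Hnq.
  - specialize (H17 ltac:(lia)). replace (S (S u) - 1)%nat with (S u) in H17, Hnq by lia.
    destruct (descend_step m u r Hb H15 H17 H16 Hm Hq Hnq)
      as (N & r1 & m1 & HN & Hr & Hb1 & E15 & E17 & E16 & Hm1 & Hq1 & Hnq1).
    destruct (IH (S u) ltac:(lia) m1 r1 Hb1 E15 ltac:(intros; replace (S u - 1)%nat with u by lia; exact E17)
       E16 Hm1 Hq1 ltac:(replace (S u - 1)%nat with u by lia; exact Hnq1))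
      as (N' & m' & r' & Hr' & Hb' & F16 & Fm & Fq & Fnq & FN).
    exists (N + N')%nat, m', r'. split.
    { exact (runs_to_trans _ _ _ _ _ _ _ _ _ Hr Hr'). }
    refine (conj Hb' (conj F16 (conj Fm (conj Fq (conj Fnq _))))). lia.
Qed.
End Descent.

(* [t] records how often the gap [hi - lo] has been halved. *)
Definition bisect_inv a i d B t lo hi :=
  (B <= lo)%nat /\ (lo < hi)%nat /\ (hi <= i)%nat /\ flat a i d lo /\ steep a i d hi /\
  (2 ^ t * (hi - lo - 1) <= lo)%nat.

(* A bisection step only happens while the gap exceeds [d * lo], which bounds their number. *)
Lemma bisect_len_small d t (lo hi : nat) : 0 < d -> (2 <= hi - lo)%nat ->
  (2 ^ t * (hi - lo - 1) <= lo)%nat -> d * INR lo < INR (hi - lo) -> d * 2 ^ t < 2.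
Proof.
  intros Hd Hg Ht Hc. apply le_INR in Ht. rewrite mult_INR, pow_INR, minus_INR in Ht by lia.
  replace (INR 2) with 2 in Ht by (simpl; lra). simpl (INR 1) in Ht.
  assert (HG : 2 <= INR (hi - lo)) by (apply (le_INR 2); exact Hg).
  set (G := INR (hi - lo)) in *.
  assert (Hp : 0 < 2 ^ t) by (apply pow_lt; lra).
  assert (2 ^ t * G <= 2 ^ t * (2 * (G - 1))) by (apply Rmult_le_compat_l; lra).
  assert (d * (2 ^ t * G) <= d * (2 * INR lo)) by (apply Rmult_le_compat_l; lra).
  apply (Rmult_lt_reg_r G); [lra|]. nra.
Qed.

Lemma bisect_halves t lo hi mid : (2 * mid <= lo + hi <= 2 * mid + 1)%nat -> (2 <= hi - lo)%nat ->
  (2 ^ t * (hi - lo - 1) <= lo)%nat ->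
  (2 ^ S t * (mid - lo - 1) <= lo)%nat /\ (2 ^ S t * (hi - mid - 1) <= mid)%nat.
Proof.
  intros Hmid Hg Ht. rewrite Nat.pow_succ_r'.
  assert (2 * (mid - lo - 1) <= hi - lo - 1 /\ 2 * (hi - mid - 1) <= hi - lo - 1)%nat as [Hl Hr] by lia.
  split; [|assert (lo <= mid)%nat by lia]; nia.
Qed.

Lemma bisect_inv_left a i d B t lo hi mid : (2 * mid <= lo + hi <= 2 * mid + 1)%nat -> (2 <= hi - lo)%nat ->
  bisect_inv a i d B t lo hi -> steep a i d mid -> bisect_inv a i d B (S t) lo mid.
Proof.
  intros Hmid Hg (HBl & Hlh & Hhi & Hq & _ & Ht) Hsteep.
  destruct (bisect_halves t lo hi mid Hmid Hg Ht).
  refine (conj _ (conj _ (conj _ (conj Hq (conj Hsteep _))))); lia.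
Qed.

Lemma bisect_inv_right a i d B t lo hi mid : (2 * mid <= lo + hi <= 2 * mid + 1)%nat -> (2 <= hi - lo)%nat ->
  bisect_inv a i d B t lo hi -> flat a i d mid -> bisect_inv a i d B (S t) mid hi.
Proof.
  intros Hmid Hg (HBl & Hlh & Hhi & _ & Hdr & Ht) Hflat.
  destruct (bisect_halves t lo hi mid Hmid Hg Ht).
  refine (conj _ (conj _ (conj _ (conj Hflat (conj Hdr _))))); lia.
Qed.

Lemma run_bisect_init a r n d i O ai B m : inner_regs r n d i O ai B -> r 16%nat = INR m ->
  exists r', runs_to a 4 59 r 64 r' /\ inner_regs r' n d i O ai B /\
  r' 20%nat = INR (B * m) /\ r' 21%nat = INR (if Nat.ltb i (2 * (B * m)) then i else 2 * (B * m)).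
Proof.
  intros Hb H16. pose proof Hb as (H0 & H2 & H3 & H4 & H5 & H6 & H7 & H8 & H12).
  assert (E1 : INR B * INR m = INR (B * m)) by (rewrite mult_INR; reflexivity).
  assert (E2 : INR (B * m) * 2 = INR (2 * (B * m))) by (rewrite (mult_INR 2 (B * m)); simpl; lra).
  destruct (Nat.ltb i (2 * (B * m))) eqn:E.
  - apply Nat.ltb_lt in E. assert (Hc : INR i < INR (2 * (B * m))) by (apply lt_INR; exact E).
    eexists. split.
    { intros f. step. step. step. simpl_upd. rewrite ?H12, ?H16, ?E1, ?H3, ?H6, ?E2. branch cx; [|contradiction].
      step. reflexivity. }
    split; [keep_inner; exact Hb|]. simpl_upd. rewrite ?H12, ?H16, ?E1, ?H6, ?H2. split; [reflexivity|lra].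
  - apply Nat.ltb_ge in E. assert (Hc : ~ INR i < INR (2 * (B * m))) by (apply Rle_not_lt, le_INR; exact E).
    eexists. split.
    { intros f. step. step. step. simpl_upd. rewrite ?H12, ?H16, ?E1, ?H3, ?H6, ?E2. branch cx; [contradiction|].
      step. reflexivity. }
    split; [keep_inner; exact Hb|]. simpl_upd. rewrite ?H12, ?H16, ?E1, ?H3, ?E2. split; reflexivity.
Qed.

Section Bisection.
Variables (a : nat -> R) (n : nat) (d : R) (i : nat) (O : R) (B : nat).
Hypothesis Hd : 0 < d.

Lemma bisect_exit t lo hi r : inner_regs r n d i O (a i) B -> r 20%nat = INR lo -> r 21%nat = INR hi ->
  bisect_inv a i d B t lo hi -> ~ (1 < INR (hi - lo) /\ d * INR lo < INR (hi - lo)) ->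
  exists N r1, (N <= 5)%nat /\ runs_to a N 64 r 82 r1 /\
  inner_regs r1 n d i O (a i) B /\ r1 20%nat = INR lo /\ r1 21%nat = INR hi.
Proof.
  intros Hb H20 H21 (HBl & Hlh & Hhi & _) Hc. pose proof Hb as (H0 & H2 & H3 & H4 & H5 & H6 & H7 & H8 & H12).
  assert (Eg : INR hi - INR lo = INR (hi - lo)) by (rewrite minus_INR by lia; reflexivity).
  destruct (Rlt_dec 1 (INR (hi - lo))) as [c1|c1].
  - assert (c2 : ~ d * INR lo < INR (hi - lo)) by tauto.
    exists 5%nat. eexists. split; [lia|]. split.
    { intros f. step. step. simpl_upd. rewrite ?H20, ?H21, ?H2, ?Eg. branch c; [|contradiction].
      step. step. simpl_upd. rewrite ?H5, ?H20, ?H21, ?Eg. branch c'; [contradiction|]. step. reflexivity. }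
    split; [keep_inner; exact Hb|]. simpl_upd. auto.
  - exists 3%nat. eexists. split; [lia|]. split.
    { intros f. step. step. simpl_upd. rewrite ?H20, ?H21, ?H2, ?Eg. branch c; [contradiction|]. step. reflexivity. }
    split; [keep_inner; exact Hb|]. simpl_upd. auto.
Qed.

Lemma bisect_step t lo hi r : inner_regs r n d i O (a i) B -> r 20%nat = INR lo -> r 21%nat = INR hi ->
  bisect_inv a i d B t lo hi -> 1 < INR (hi - lo) -> d * INR lo < INR (hi - lo) ->
  d * 2 ^ t < 2 /\
  exists lo' hi' r1, runs_to a 14 64 r 64 r1 /\
  inner_regs r1 n d i O (a i) B /\ r1 20%nat = INR lo' /\ r1 21%nat = INR hi' /\
  bisect_inv a i d B (S t) lo' hi' /\ (hi' - lo' < hi - lo)%nat.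
Proof.
  intros Hb H20 H21 Hinv c1 c2. pose proof Hinv as (HBl & Hlh & Hhi & _ & _ & Ht).
  pose proof Hb as (H0 & H2 & H3 & H4 & H5 & H6 & H7 & H8 & H12).
  assert (Eg : INR hi - INR lo = INR (hi - lo)) by (rewrite minus_INR by lia; reflexivity).
  assert (Hg2 : (2 <= hi - lo)%nat).
  { destruct (le_lt_dec 2 (hi - lo)) as [h|h]; [exact h|].
    assert (Hle : (hi - lo <= 1)%nat) by lia. apply le_INR in Hle. simpl in Hle. lra. }
  split; [exact (bisect_len_small d t lo hi Hd Hg2 Ht c2)|].
  set (mid := ((lo + hi) / 2)%nat).
  assert (Hmid : (2 * mid <= lo + hi <= 2 * mid + 1)%nat).
  { pose proof (Nat.div_mod (lo + hi) 2 ltac:(lia)). pose proof (Nat.mod_upper_bound (lo + hi) 2 ltac:(lia)).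
    unfold mid. lia. }
  assert (Efl : floorR ((INR lo + INR hi) / 2) = INR mid) by (rewrite <- plus_INR; apply floorR_half_INR).
  assert (Hmi : (mid <= i)%nat) by lia.
  destruct (Rlt_dec (a (i - mid + 1)%nat * (1 + d)) (a i)) as [c3|c3].
  - exists lo, mid. eexists. split.
    { intros f. step. step. simpl_upd. rewrite ?H20, ?H21, ?H2, ?Eg. branch c; [|contradiction].
      step. step. simpl_upd. rewrite ?H5, ?H20, ?H21, ?Eg. branch c'; [|contradiction].
      step. step. step. step. step. step. simpl_upd. rewrite ?H20, ?H21, ?H3, ?Efl, ?H6, ?H2, query_index_sub by exact Hmi.
      step. step. branch c''; rewrite ?H4, ?H8 in c''; [|contradiction]. step. step. reflexivity. }
    split; [keep_inner; exact Hb|]. simpl_upd. rewrite ?H20, ?H21, ?H3, ?Efl, ?H2.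
    split; [reflexivity|]. split; [lra|]. split; [exact (bisect_inv_left a i d B t lo hi mid Hmid Hg2 Hinv c3)|lia].
  - exists mid, hi. eexists. split.
    { intros f. step. step. simpl_upd. rewrite ?H20, ?H21, ?H2, ?Eg. branch c; [|contradiction].
      step. step. simpl_upd. rewrite ?H5, ?H20, ?H21, ?Eg. branch c'; [|contradiction].
      step. step. step. step. step. step. simpl_upd. rewrite ?H20, ?H21, ?H3, ?Efl, ?H6, ?H2, query_index_sub by exact Hmi.
      step. step. branch c''; rewrite ?H4, ?H8 in c''; [contradiction|]. step. step. reflexivity. }
    split; [keep_inner; exact Hb|]. simpl_upd. rewrite ?H20, ?H21, ?H3, ?Efl, ?H2.
    split; [lra|]. split; [reflexivity|].
    split; [|lia]. apply (bisect_inv_right a i d B t lo hi mid Hmid Hg2 Hinv). split; [exact Hmi|lra].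
Qed.

Lemma bisect_loop g : forall t lo hi r, (hi - lo <= g)%nat ->
  inner_regs r n d i O (a i) B -> r 20%nat = INR lo -> r 21%nat = INR hi -> bisect_inv a i d B t lo hi ->
  exists N b lo' hi' r', runs_to a N 64 r 82 r' /\
  inner_regs r' n d i O (a i) B /\ r' 20%nat = INR lo' /\ r' 21%nat = INR hi' /\ bisect_inv a i d B b lo' hi' /\
  ~ (1 < INR (hi' - lo') /\ d * INR lo' < INR (hi' - lo')) /\
  (N <= 14 * (b - t) + 5)%nat /\ (t <= b)%nat /\ (b = t \/ d * 2 ^ (b - 1) < 2).
Proof.
  induction g as [|g IH]; intros t lo hi r Hg Hb H20 H21 Hi;
    (destruct (Rlt_dec 1 (INR (hi - lo))) as [c1|c1];
     [destruct (Rlt_dec (d * INR lo) (INR (hi - lo))) as [c2|c2]|]);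
    try (assert (Hc : ~ (1 < INR (hi - lo) /\ d * INR lo < INR (hi - lo))) by tauto;
         destruct (bisect_exit t lo hi r Hb H20 H21 Hi Hc) as (N & r1 & HN & Hr & Hb1 & E20 & E21);
         exists N, t, lo, hi, r1; do 6 (split; [assumption|]); split; [lia|]; split; [lia|]; left; reflexivity).
  - replace (hi - lo)%nat with 0%nat in c1 by lia. simpl in c1. lra.
  - destruct (bisect_step t lo hi r Hb H20 H21 Hi c1 c2)
      as (Hdt & lo1 & hi1 & r1 & Hr & Hb1 & E20 & E21 & Hi1 & Hlt).
    destruct (IH (S t) lo1 hi1 r1 ltac:(lia) Hb1 E20 E21 Hi1)
      as (N & b & lo' & hi' & r' & Hr' & Hb' & F20 & F21 & Fi & Fc & FN & Ftb & Fb).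
    exists (14 + N)%nat, b, lo', hi', r'.
    split; [exact (runs_to_trans _ _ _ _ _ _ _ _ _ Hr Hr')|].
    do 5 (split; [assumption|]). split; [lia|]. split; [lia|].
    right. destruct Fb as [Fb|Fb]; [subst b; simpl; rewrite Nat.sub_0_r; exact Hdt|exact Fb].
Qed.
End Bisection.

Lemma run_commit a r n d i O B lo hi : inner_regs r n d i O (a i) B -> r 20%nat = INR lo -> r 21%nat = INR hi ->
  (lo <= hi)%nat -> (hi <= i)%nat ->
  exists r', runs_to a 13 82 r 7 r' /\
  outer_regs r' n d (i - hi) (O + INR lo * a (i - lo + 1)%nat + INR (hi - lo) * a (i - hi + 1)%nat).
Proof.
  intros Hb H20 H21 Hlh Hhi. pose proof Hb as (H0 & H2 & H3 & H4 & H5 & H6 & H7 & H8 & H12).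
  eexists. split.
  { intros f. step. step. step. simpl_upd. rewrite ?H6, ?H20, ?H2, query_index_sub by lia.
    step. step. step. step. step. simpl_upd. rewrite ?H6, ?H21, ?H2, query_index_sub by lia.
    do 5 step. reflexivity. }
  unfold outer_regs. simpl_upd. rewrite ?H0, ?H2, ?H3, ?H4, ?H5, ?H6, ?H7, ?H20, ?H21.
  rewrite !minus_INR by lia. repeat split; reflexivity.
Qed.

Lemma bisect_inv_start a i d B m : (1 <= B)%nat -> (1 <= m)%nat -> steep a i d i ->
  flat a i d (B * m) -> ~ flat a i d (B * m * 2) ->
  bisect_inv a i d B 0 (B * m) (if Nat.ltb i (2 * (B * m)) then i else 2 * (B * m)).
Proof.
  intros HB Hm Hsteep [Hlo Hflat] Hnflat. unfold steep in Hsteep.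
  assert (Hlt : (B * m < i)%nat).
  { destruct (Nat.eq_dec (B * m) i) as [E|E]; [|lia]. rewrite E in Hflat. lra. }
  assert (B <= B * m)%nat by nia.
  unfold bisect_inv. destruct (Nat.ltb i (2 * (B * m))) eqn:E.
  - apply Nat.ltb_lt in E. repeat split; try lia; [exact Hflat|exact Hsteep|simpl; lia].
  - apply Nat.ltb_ge in E. repeat split; try lia; [exact Hflat| |simpl; lia].
    unfold steep. destruct (Rlt_dec (a (i - 2 * (B * m) + 1)%nat * (1 + d)) (a i)) as [h|h]; [exact h|].
    exfalso. apply Hnflat. split; [lia|]. replace (B * m * 2)%nat with (2 * (B * m))%nat by ring. lra.
Qed.

Definition search_result a i d B lo hi :=
  (B <= lo)%nat /\ (lo < hi <= i)%nat /\ flat a i d lo /\ steep a i d hi /\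
  ~ (1 < INR (hi - lo) /\ d * INR lo < INR (hi - lo)).

Lemma run_search a n d i O B r : (1 <= n)%nat -> 0 < d <= 1 -> (1 <= B)%nat -> (B < i <= n)%nat ->
  steep a i d i -> flat a i d B -> inner_regs r n d i O (a i) B ->
  exists N lo hi r', INR (29 + N) <= round_cost_bound n d /\ runs_to a N 27 r 82 r' /\
    inner_regs r' n d i O (a i) B /\ r' 20%nat = INR lo /\ r' 21%nat = INR hi /\
    search_result a i d B lo hi.
Proof.
  intros Hn Hd HB Hi Hsteep Hflat Hb.
  destruct (run_gallop_init a r n d i O (a i) B Hb) as (r1 & Hr1 & Hb1 & F13 & F14 & F15).
  destruct (gallop_loop a n d i O B HB (S i) 0 r1 ltac:(lia) Hb1 F13 F14 F15 ltac:(intros; lia))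
    as (Ng & J & r2 & Hr2 & Hb2 & K13 & K15 & KA & KN & KNg & _).
  destruct (run_descend_init a r2 n d i O (a i) B J Hb2 K13) as (r3 & Hr3 & Hb3 & D16 & D17 & D15).
  rewrite K15 in D15.
  assert (Hqm : flat a i d (B * tower_prev J)).
  { destruct J as [|J]; [simpl; rewrite Nat.mul_1_r; exact Hflat|]. simpl tower_prev. apply KA. lia. }
  assert (Hnqm : ~ flat a i d (B * tower_prev J * tower (J - 1)))
    by (rewrite <- Nat.mul_assoc, tower_prev_mul; exact KN).
  destruct (descend_loop a n d i O B J (tower_prev J) r3 Hb3 D15 D17 D16 (tower_prev_ge_1 J) Hqm Hnqm)
    as (Nl & m & r4 & Hr4 & Hb4 & L16 & Lm & Lq & Lnq & LN).
  destruct (run_bisect_init a r4 n d i O (a i) B m Hb4 L16) as (r5 & Hr5 & Hb5 & E20 & E21).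
  pose proof (bisect_inv_start a i d B m HB Lm Hsteep Lq Lnq) as Hinv.
  destruct (bisect_loop a n d i O B ltac:(lra) _ 0 _ _ r5 (le_n _) Hb5 E20 E21 Hinv)
    as (Nb & b & lo & hi & r6 & Hr6 & Hb6 & B20 & B21 & Bi & Bc & BN & _ & Bb).
  destruct Bi as (Bl & Blh & Bhi & Bq & Bdr & _).
  exists (3 + (Ng + (2 + (Nl + (4 + Nb)))))%nat, lo, hi, r6. split.
  { apply (round_cost_le n d _ J b Hn Hd); [lia| |].
    - intros HJ. destruct (KA (J - 1)%nat ltac:(lia)) as [HK _].
      assert (tower (J - 1) <= B * tower (J - 1))%nat by (apply Nat.le_mul_l; lia). lia.
    - destruct Bb as [Bb|Bb]; [left; exact Bb|right; exact Bb]. }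
  split.
  { repeat (eapply runs_to_trans; [eassumption|]). exact Hr6. }
  exact (conj Hb6 (conj B20 (conj B21 (conj Bl (conj (conj Blh Bhi) (conj Bq (conj Bdr Bc))))))).
Qed.

Lemma search_result_progress a n d i O B lo hi : 0 < d -> sorted_nonneg a n -> (1 <= i <= n)%nat ->
  0 < a i -> block_size_ok n d i B -> search_result a i d B lo hi ->
  round_progress a n d i O (i - hi)
    (O + INR lo * a (i - lo + 1)%nat + INR (hi - lo) * a (i - hi + 1)%nat).
Proof.
  intros Hd Hs Hi Hai HBok (HBl & Hlh & Hflat & Hsteep & Hstop).
  pose proof (proj1 HBok) as HB1.
  apply (round_progress_intro a n d i O (i - hi) _ B Hd Hi Hai ltac:(lia)); [|lia|exact HBok|].
  { intros Hi'. apply (steep_next a n d i hi); [lra|assumption|lia|lia|exact Hsteep]. }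
  intros HI.
  pose proof (approx_inv_peel a n d i lo O ltac:(lra) Hs ltac:(lia) ltac:(lia)
    ltac:(left; destruct Hflat; lra) HI) as H1.
  pose proof (approx_inv_peel a n d (i - lo) (hi - lo) (O + INR lo * a (i - lo + 1)%nat) ltac:(lra) Hs ltac:(lia) ltac:(lia)) as H2.
  replace (i - lo - (hi - lo))%nat with (i - hi)%nat in H2 by lia.
  replace (i - lo - (hi - lo) + 1)%nat with (i - hi + 1)%nat in H2 by lia.
  apply H2; [|exact H1].
  destruct (Rle_lt_dec (INR (hi - lo)) 1) as [g1|g1].
  - left. assert (hi - lo <= 1)%nat by (apply INR_le; simpl; lra).
    replace (i - hi + 1)%nat with (i - lo)%nat by lia.
    assert (0 <= a (i - lo)%nat) by (apply (sorted_ge0 a n); [assumption|lia]).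
    assert (0 <= a (i - lo)%nat * d) by (apply Rmult_le_pos; lra). lra.
  - right. assert (INR (hi - lo) <= d * INR lo) by (apply Rnot_lt_le; intros h; apply Hstop; split; assumption).
    assert (INR lo <= INR (n - (i - lo))) by (apply le_INR; lia).
    assert (d * INR lo <= d * INR (n - (i - lo))) by (apply Rmult_le_compat_l; lra). lra.
Qed.

Lemma short_block_progress a n d i O B : 0 < d -> sorted_nonneg a n -> (1 <= i <= n)%nat ->
  0 < a i -> (B < i)%nat -> block_size_ok n d i B -> steep a i d B ->
  round_progress a n d i O (i - B) (O + INR B * a (i - B + 1)%nat).
Proof.
  intros Hd Hs Hi Hai HBi HBok Hsteep. pose proof HBok as (HB1 & HB2 & _).
  apply (round_progress_intro a n d i O (i - B) _ B Hd Hi Hai ltac:(lia)); [|lia|exact HBok|].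
  { intros Hi'. apply (steep_next a n d i B); [lra|assumption|lia|lia|exact Hsteep]. }
  intros HI. apply (approx_inv_peel a n d i B O ltac:(lra) Hs ltac:(lia) ltac:(lia)); [|exact HI].
  destruct HB2 as [->|HB2]; [|right; exact HB2].
  left. replace (i - 1 + 1)%nat with i by lia. assert (0 <= a i * d) by (apply Rmult_le_pos; lra). lra.
Qed.

Lemma prefix_charge a n d i O : 0 <= d -> sorted_nonneg a n -> (1 <= i <= n)%nat ->
  (a i <= (1 + d) * a 1%nat \/ INR i <= d * INR (n - i)) ->
  approx_inv a n d i O -> approx_inv a n d 0 (O + INR i * a 1%nat).
Proof.
  intros Hd Hs Hi Hv HI.
  pose proof (approx_inv_peel a n d i i O Hd Hs ltac:(lia) ltac:(lia)) as H.
  rewrite Nat.sub_diag in H. apply H; [exact Hv|exact HI].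
Qed.

Lemma run_round a n d i O r : 0 < d <= 1 -> sorted_nonneg a n -> (1 <= i <= n)%nat -> outer_regs r n d i O ->
  (exists N, INR N <= round_cost_bound n d /\ run prog a N 7 r = Some (O + INR i * a 1%nat) /\
     (approx_inv a n d i O -> approx_inv a n d 0 (O + INR i * a 1%nat))) \/
  (exists N i' O' r', INR N <= round_cost_bound n d /\ runs_to a N 7 r 7 r' /\
     outer_regs r' n d i' O' /\ round_progress a n d i O i' O').
Proof.
  intros Hd Hs Hi Hb.
  assert (Hn : (1 <= n)%nat) by lia.
  pose proof (round_cost_bound_ge n d Hn Hd) as HPB.
  assert (Ha1 : 0 <= a 1%nat) by (apply (sorted_ge0 a n); [assumption|lia]).
  destruct (run_round_head a r n d i O Hb ltac:(lia)) as [[Hc Hrun] | [Hc (r1 & Hr1 & Hb1 & E8 & E9)]].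
  { left. exists 8%nat. split; [simpl; lra|]. split; [exact Hrun|].
    intros HI. apply prefix_charge; [lra|exact Hs|exact Hi| |exact HI]. left. lra. }
  assert (Hai : 0 < a i) by (assert (0 <= a 1%nat * d) by (apply Rmult_le_pos; lra); lra).
  assert (Hsteep : steep a i d i) by (unfold steep; replace (i - i + 1)%nat with 1%nat by lia; exact Hc).
  destruct (run_block_size a r1 n d i O ltac:(lra) Hb1 ltac:(lia))
    as (N1 & B & r2 & HN1 & Hr2 & HBok & Hb2 & E8' & E9' & E12).
  rewrite E8 in E8'. rewrite E9 in E9'. pose proof HBok as (HB1 & HB2 & _).
  destruct (run_block_test a r2 n d i O B Hb2 E8' E9' E12 Hi HB1) as
    [[HiB Hrun] | [[HBi [Hdr (r3 & Hr3 & Hb3)]] | [HBi [Hq (r3 & Hr3 & Hb3)]]]].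
  - left. exists (5 + (N1 + 5))%nat. split.
    { apply (Rle_trans _ (INR 15)); [apply le_INR; lia|simpl; lra]. }
    split; [exact (runs_to_halt _ _ _ _ _ _ _ _ Hr1 (runs_to_halt _ _ _ _ _ _ _ _ Hr2 Hrun))|].
    intros HI. apply prefix_charge; [lra|exact Hs|exact Hi| |exact HI]. destruct HB2 as [HB2|HB2].
    + left. replace i with 1%nat by lia. assert (0 <= a 1%nat * d) by (apply Rmult_le_pos; lra). lra.
    + right. apply le_INR in HiB. lra.
  - right. exists (5 + (N1 + 10))%nat, (i - B)%nat, (O + INR B * a (i - B + 1)%nat), r3.
    split; [apply (Rle_trans _ (INR 20)); [apply le_INR; lia|simpl; lra]|].
    split; [exact (runs_to_trans _ _ _ _ _ _ _ _ _ Hr1 (runs_to_trans _ _ _ _ _ _ _ _ _ Hr2 Hr3))|].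
    split; [exact Hb3|]. apply short_block_progress; assumption || lra.
  - right.
    destruct (run_search a n d i O B r3 Hn Hd HB1 ltac:(lia) Hsteep Hq Hb3)
      as (Ns & lo & hi & r4 & HNs & Hr4 & Hb4 & B20 & B21 & Hres).
    pose proof Hres as (_ & Hlh & _).
    destruct (run_commit a r4 n d i O B lo hi Hb4 B20 B21 ltac:(lia) ltac:(lia)) as (r5 & Hr5 & Hb5).
    exists (5 + (N1 + (6 + (Ns + 13))))%nat, (i - hi)%nat,
      (O + INR lo * a (i - lo + 1)%nat + INR (hi - lo) * a (i - hi + 1)%nat), r5.
    split; [apply (Rle_trans _ (INR (29 + Ns))); [apply le_INR; lia|exact HNs]|].
    split; [repeat (eapply runs_to_trans; [eassumption|]); exact Hr5|].
    split; [exact Hb5|]. apply (search_result_progress a n d i O B); assumption || lra.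
Qed.

Lemma run_main_loop a n d : 0 < d <= 1 -> sorted_nonneg a n -> (1 <= n)%nat ->
  forall i k O r, (i <= n)%nat -> outer_regs r n d i O -> approx_inv a n d i O ->
  count_potential d n k i -> ratio_potential a n d k i ->
  exists N s, run prog a N 7 r = Some s /\ approx_inv a n d 0 s /\
    INR N <= (rounds_bound a n d - INR k + 1) * round_cost_bound n d.
Proof.
  intros Hd Hs Hn i. induction i as [i IH] using lt_wf_ind. intros k O r Hi Hb HI P1 P2.
  pose proof (round_cost_bound_ge n d Hn Hd) as HPB.
  pose proof (potentials_rounds a n d k i Hd Hs Hi P1 P2) as Hk.
  assert (HK0 : round_cost_bound n d <= (rounds_bound a n d - INR k + 1) * round_cost_bound n d) by nra.
  destruct i as [|i].
  - exists 2%nat, O. pose proof Hb as (H0 & H2 & H3 & H4 & H5 & H6 & H7). split.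
    { step. rewrite H6, H2. branch cx; [|simpl in cx; lra]. step. exact (f_equal Some H7). }
    split; [exact HI|]. simpl. lra.
  - destruct (run_round a n d (S i) O r Hd Hs ltac:(lia) Hb) as
      [(N & HN & Hrun & Hfin) | (N & i' & O' & r' & HN & Hr & Hb' & Hi' & HInv & HPot)].
    + exists N, (O + INR (S i) * a 1%nat). split; [exact Hrun|]. split; [exact (Hfin HI)|lra].
    + destruct (HPot k P1 P2) as [P1' P2'].
      destruct (IH i' Hi' (S k) O' r' ltac:(lia) Hb' (HInv HI) P1' P2') as (N' & s & Hrun & HI' & HN').
      exists (N + N')%nat, s. split; [rewrite Hr; exact Hrun|]. split; [exact HI'|].
      rewrite plus_INR. rewrite S_INR in HN'. nra.
Qed.

Lemma run_init a n eps : runs_to a 7 0 (init_regs n eps) 7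
  (upd (upd (upd (upd (upd (upd (upd (init_regs n eps) 2 1) 3 (1 + 1)) 23 (1 + 1 + 1))
      5 (eps / (1 + 1 + 1))) 4 (1 + eps / (1 + 1 + 1))) 7 0) 6 (INR n * 1)).
Proof. intros f. do 7 step. simpl_upd. reflexivity. Qed.

Lemma init_outer_regs n eps : outer_regs
  (upd (upd (upd (upd (upd (upd (upd (init_regs n eps) 2 1) 3 (1 + 1)) 23 (1 + 1 + 1))
      5 (eps / (1 + 1 + 1))) 4 (1 + eps / (1 + 1 + 1))) 7 0) 6 (INR n * 1))
  n (eps / 3) n 0.
Proof. unfold outer_regs. simpl_upd. unfold init_regs. replace (1 + 1 + 1) with 3 by lra. repeat split; lra. Qed.

Theorem theorem1 :
  exists (P : program) (C : R), 0 < C /\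
    forall (n : nat) (eps : R) (a : nat -> R),
      (1 <= n)%nat -> 0 < eps < 1 -> sorted_nonneg a n ->
      exists (s : R) (k : nat),
        run P a k 0 (init_regs n eps) = Some s /\
        approx eps (sumR a n) s /\
        INR k <= C * time_bound eps n (log_ratio a n).
Proof.
  exists prog, 30000. split; [lra|]. intros n eps a Hn He Hs.
  destruct (potentials_init a n (eps / 3)) as [P1 P2].
  destruct (run_main_loop a n (eps / 3) ltac:(lra) Hs Hn n 0 0 _ (le_n n) (init_outer_regs n eps)
              (approx_inv_init a n (eps / 3)) P1 P2) as (N & s & Hrun & HI & HN).
  exists s, (7 + N)%nat. split; [exact (runs_to_halt _ _ _ _ _ _ _ _ (run_init a n eps) Hrun)|].
  split; [exact (approx_inv_final a n eps s Hn He Hs HI)|].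
  pose proof (total_cost_le n eps a Hn He Hs). simpl INR in HN.
  rewrite plus_INR. replace (INR 7) with 7 by (simpl; lra). lra.
Qed.
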